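(* Let $k\ge2$, let $\chi_1,\chi_2$ be primitive non-trivial Dirichlet characters with conductors $q_1,q_2$, let $0\le n\le k-2$, and let $\gamma=\begin{pmatrix}a&b\\c&d\end{pmatrix}\in\Gamma_0(q_1q_2)$ with $c\ge1$. Put $c'=c/q_2$, $z_1=(i-d)/c$ and $\gamma z_1=(i+a)/c$. Then $$\Big|\sum_{A\ge1}\frac{\chi_1(A)}{A^{n+1}}\sum_{B\ge1}\overline{\chi_2}(B)B^{k-n-2}e(ABz_1)\Big|\ll M(d/c')\,c^{k-n-2}\log^2c'$$ and $$\Big|\sum_{A\ge1}\frac{\chi_1(A)}{A^{n+1}}\sum_{B\ge1}\overline{\chi_2}(B)B^{k-n-2}e(AB\gamma z_1)\Big|\ll M(a/c')\,c^{k-n-2}\log^2c',$$ with implied constants independent of $\gamma$.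
   Context: Notation: $e(z)=\exp(2\pi iz)$. For $q\in\mathbb Q$, write its continued fraction expansion as $q=[a_0;a_1,\dots,a_n]$ (the alternative expansion being $[a_0;a_1,\dots,a_n-1,1]$) and set $M(q)=\max\{a_1,\dots,a_n\}$. *)

From Stdlib Require Import Reals ZArith List Lia.
From Coquelicot Require Export Coquelicot.
Open Scope R_scope.

(* e(z) = exp(2 pi i z), written out for z = x + i y. *)
Definition e (z : C) : C :=
  let r := exp (- 2 * PI * Im z) in
  (r * cos (2 * PI * Re z), r * sin (2 * PI * Re z)).

(* Sum of a complex series sum_{m>=0} f m (real and imaginary parts summed
   separately; this is the usual sum whenever the series converges). *)
Definition CSeries (f : nat -> C) : C :=
  (Series (fun m => Re (f m)), Series (fun m => Im (f m))).

Definition is_dirichlet_char (q : nat) (chi : Z -> C) : Prop :=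
  (0 < q)%nat /\
  chi 1%Z = RtoC 1 /\
  (forall m n : Z, chi (m * n)%Z = Cmult (chi m) (chi n)) /\
  (forall n : Z, chi (n + Z.of_nat q)%Z = chi n) /\
  (forall n : Z, Z.gcd n (Z.of_nat q) <> 1%Z -> chi n = RtoC 0) /\
  (forall n : Z, Z.gcd n (Z.of_nat q) = 1%Z -> chi n <> RtoC 0).

(* chi mod q is primitive: it is not induced by a character of any
   smaller modulus d | q, i.e. for every positive proper divisor d of q there
   is m = 1 (mod d) coprime to q with chi m <> RtoC 1. *)
Definition primitive_mod (q : nat) (chi : Z -> C) : Prop :=
  forall d : Z, (0 < d)%Z -> (d | Z.of_nat q)%Z -> (d < Z.of_nat q)%Z ->
    exists m : Z, Z.modulo m d = Z.modulo 1 d /\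
                  Z.gcd m (Z.of_nat q) = 1%Z /\ chi m <> RtoC 1.

Definition primitive_char_conductor (q : nat) (chi : Z -> C) : Prop :=
  is_dirichlet_char q chi /\ primitive_mod q chi.

Definition nontrivial_char (chi : Z -> C) : Prop :=
  exists n : Z, chi n <> RtoC 0 /\ chi n <> RtoC 1.

Definition in_Gamma0 (N : nat) (a b c d : Z) : Prop :=
  (a * d - b * c)%Z = 1%Z /\ (Z.of_nat N | c)%Z.

(* Partial quotients of p/r produced by the Euclidean algorithm
   (floor division), which gives the continued fraction expansion
   [a0; a1, ..., an] with an >= 2 when n >= 1 (the non-alternative one). *)
Fixpoint cf_quots (fuel : nat) (p r : Z) : list Z :=
  match fuel with
  | O => nil
  | S f => if (r <=? 0)%Z then nil else (p / r)%Z :: cf_quots f r (p mod r)%Z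
  end.

Definition cf_expansion (p r : Z) : list Z := cf_quots (Z.to_nat r + 2) p r.

(* M(p/r) = max{a1, ..., an} (0 if the list is empty, i.e. p/r integer),
   for r >= 1. *)
Definition Mcf (p r : Z) : Z := fold_right Z.max 0%Z (tl (cf_expansion p r)).

Definition double_sum (chi1 chi2 : Z -> C) (k n : nat) (z : C) : C :=
  CSeries (fun i =>
    let A := S i in
    Cmult (Cdiv (chi1 (Z.of_nat A)) (RtoC (INR A ^ (n + 1))))
    (CSeries (fun j =>
      let B := S j in
      Cmult (Cmult (Cconj (chi2 (Z.of_nat B))) (RtoC (INR B ^ (k - n - 2))))
            (e (Cmult (RtoC (INR A * INR B)) z))))).

From Stdlib Require Import Reals ZArith Lia Lra List.
From Coquelicot Require Import Coquelicot.
Open Scope R_scope.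

(* With x_A = e(A z) the double sum is sum_A chi1(A) A^(-n-1) F(x_A), where
   F(x) = sum_B conj(chi2(B)) B^m x^B and m = k-n-2.  As conj chi2 is q2-periodic
   and B^m is a polynomial of degree m, (1 - x^q2)^(m+1) F(x) is a polynomial, so
   |F(x)| << |x| / |1 - x^q2|^(m+1).  Here x_A^q2 = e(A (s + i) / c') with s = -d
   (resp. a), hence |1 - x_A^q2| >> ||A s / c'|| for A < c' and >= 1/2 for A >= c'.
   The terms with A >= c' sum to O(q2); those with A < c' to at most
   c'^m sum_(A < c') 1/(A ||A d / c'||) << c^m M log^2 c'.  For this last sum, the
   continued fraction of d/c' gives c' <= (M+2) |h| |h d - l c'| for h <> 0, so A
   is determined by its dyadic block 2^j <= A < 2^(j+1), the side of the residue
   of A d and ||A d / c'|| to precision 1/((M+2) 2^j); this pigeonhole reduces the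
   sum to O(log c') harmonic sums of length O(M c'), scaled by O(M / c'). *)

(** * Continued fractions and Diophantine approximation *)

Section ContinuedFractions.
Local Open Scope Z_scope.

Lemma comb_ge_of_det_lt (Q1 Q2 r1 r2 al be : Z) : 1 <= Q1 <= Q2 -> 0 < r1 -> 0 <= r2 ->
  be * Q2 - al * Q1 <> 0 -> Z.abs (be * Q2 - al * Q1) < Q2 ->
  r1 <= Z.abs (al * r1 + be * r2).
Proof.
  intros HQ Hr1 Hr2 Hnz Hlt.
  destruct (Z.eq_dec be 0) as [->|Hb0].
  - rewrite Z.mul_0_l, Z.add_0_r, Z.abs_mul, (Z.abs_eq r1) by lia.
    assert (1 <= Z.abs al) by lia. nia.
  - assert (al <> 0).
    { intros ->. rewrite Z.mul_0_l, Z.sub_0_r, Z.abs_mul, (Z.abs_eq Q2) in Hlt by lia.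
      assert (1 <= Z.abs be) by lia. nia. }
    destruct (Z.le_gt_cases 0 al), (Z.le_gt_cases 0 be).
    + assert (al * r1 >= r1) by nia. assert (be * r2 >= 0) by nia. lia.
    + assert (be * Q2 <= - Q2) by nia. assert (al * Q1 >= 0) by nia. lia.
    + assert (be * Q2 >= Q2) by nia. assert (al * Q1 <= 0) by nia. lia.
    + assert (al * r1 <= - r1) by nia. assert (be * r2 <= 0) by nia. lia.
Qed.

(* [(r0, r1)] are consecutive remainders of the Euclidean algorithm and [(Q0, Q1)]
   the denominators of the matching convergents, so that [q = Q0 r1 + Q1 r0] is
   invariant; [E] bounds the remaining partial quotients. *)
Lemma cf_quots_dioph (q E : Z) : forall fuel Q0 Q1 r0 r1 al be,
  Z.of_nat fuel > r1 -> 0 < r1 < r0 -> 0 <= Q0 <= Q1 -> 1 <= Q1 ->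
  q = Q0 * r1 + Q1 * r0 ->
  List.Forall (fun t => t <= E) (cf_quots fuel r0 r1) ->
  al * r0 + be * r1 <> 0 -> Q1 <= Z.abs (be * Q1 - al * Q0) ->
  q <= (E + 2) * Z.abs (be * Q1 - al * Q0) * Z.abs (al * r0 + be * r1).
Proof.
  induction fuel as [|f IH]; intros Q0 Q1 r0 r1 al be Hf Hr HQ HQ1 Hq HF Hx0 Hh;
    [simpl in Hf; lia|].
  simpl in HF. destruct (r1 <=? 0) eqn:E1; [lia|].
  apply List.Forall_cons_iff in HF as [Ha HF].
  pose proof (Z.div_mod r0 r1 ltac:(lia)) as Hdiv.
  pose proof (Z.mod_pos_bound r0 r1 ltac:(lia)) as Hr2.
  revert Ha HF Hdiv Hr2. generalize (r0 / r1) (r0 mod r1). intros a r2 Ha HF Hdiv Hr2.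
  assert (Ha1 : 1 <= a) by nia.
  replace (al * r0 + be * r1) with ((be + a * al) * r1 + al * r2) in * by (rewrite Hdiv; ring).
  replace (be * Q1 - al * Q0) with (- (al * (Q0 + a * Q1) - (be + a * al) * Q1)) in * by ring.
  rewrite Z.abs_opp in *.
  remember (Q0 + a * Q1) as Q2 eqn:EQ2. remember (be + a * al) as al' eqn:Eal.
  assert (HQ2 : Q1 <= Q2) by nia.
  destruct (Z_lt_le_dec (Z.abs (al * Q2 - al' * Q1)) Q2) as [Hlt|Hge].
  - assert (r1 <= Z.abs (al' * r1 + al * r2)) by (apply (comb_ge_of_det_lt Q1 Q2); lia).
    assert (q <= (a + 2) * (Q1 * r1)) by (rewrite Hq, Hdiv; nia).
    assert (Q1 * r1 <= Z.abs (al * Q2 - al' * Q1) * Z.abs (al' * r1 + al * r2))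
      by (apply Z.mul_le_mono_nonneg; lia).
    assert ((a + 2) * (Q1 * r1) <=
            (E + 2) * (Z.abs (al * Q2 - al' * Q1) * Z.abs (al' * r1 + al * r2)))
      by (apply Z.mul_le_mono_nonneg; lia).
    lia.
  - destruct (Z.eq_dec r2 0) as [->|Hz].
    + rewrite Z.mul_0_r, Z.add_0_r in *.
      assert (al' <> 0) by (intros ->; lia).
      assert (r1 <= Z.abs (al' * r1)) by (rewrite Z.abs_mul, (Z.abs_eq r1) by lia; nia).
      assert (q = Q2 * r1) by (rewrite Hq, Hdiv, EQ2; ring).
      assert (Q2 * r1 <= Z.abs (al * Q2 - al' * Q1) * Z.abs (al' * r1))
        by (apply Z.mul_le_mono_nonneg; lia).
      assert (1 * (Q2 * r1) <= (E + 2) * (Z.abs (al * Q2 - al' * Q1) * Z.abs (al' * r1)))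
        by (apply Z.mul_le_mono_nonneg; lia).
      lia.
    + apply (IH Q1 Q2 r1 r2 al' al); lia || exact HF.
Qed.

Lemma Forall_le_fold_max (l : list Z) : List.Forall (fun t => t <= fold_right Z.max 0 l) l.
Proof.
  induction l as [|a l IH]; simpl; constructor; [lia|].
  eapply List.Forall_impl; [|exact IH]. simpl; lia.
Qed.

Lemma fold_max_le (B : Z) (l : list Z) : 0 <= B -> List.Forall (fun t => t <= B) l ->
  fold_right Z.max 0 l <= B.
Proof. intros HB H; induction H; simpl; lia. Qed.

Lemma Mcf_eq (d N : Z) : 0 < N ->
  Mcf d N = fold_right Z.max 0 (cf_quots (S (Z.to_nat N)) N (d mod N)).
Proof.
  intros HN. unfold Mcf, cf_expansion.
  replace (Z.to_nat N + 2)%nat with (S (S (Z.to_nat N))) by lia.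
  simpl. destruct (N <=? 0) eqn:E; [lia|]. reflexivity.
Qed.

Lemma mod_neq0_of_coprime (d N : Z) : 2 <= N -> Z.gcd d N = 1 -> d mod N <> 0.
Proof.
  intros HN Hg H0. apply Z.mod_divide in H0; [|lia].
  assert (HN1 : (N | 1)) by (rewrite <- Hg; apply Z.gcd_greatest; auto using Z.divide_refl).
  apply Z.divide_pos_le in HN1; lia.
Qed.

Lemma Mcf_dioph (d N h l : Z) : 2 <= N -> Z.gcd d N = 1 -> h <> 0 ->
  h * d - l * N <> 0 ->
  N <= (Mcf d N + 2) * Z.abs h * Z.abs (h * d - l * N).
Proof.
  intros HN Hg Hh Hx.
  pose proof (mod_neq0_of_coprime d N HN Hg) as Hp0.
  pose proof (Z.div_mod d N ltac:(lia)) as Hd.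
  pose proof (Z.mod_pos_bound d N ltac:(lia)) as Hp.
  rewrite (Mcf_eq d N) by lia.
  revert Hd Hp Hp0. generalize (d / N) (d mod N). intros D p Hd Hp Hp0. subst d.
  replace (h * (N * D + p) - l * N) with ((- (l - h * D)) * N + h * p) by ring.
  replace (Z.abs h) with (Z.abs (h * 1 - (- (l - h * D)) * 0)) by (f_equal; ring).
  apply (cf_quots_dioph N _ (S (Z.to_nat N)) 0 1 N p); try lia.
  apply Forall_le_fold_max.
Qed.

Lemma cf_quots_bounded (B : Z) : forall f r0 r1, 0 <= r1 <= r0 -> r0 <= B ->
  List.Forall (fun t => t <= B) (cf_quots f r0 r1).
Proof.
  induction f as [|f IH]; intros r0 r1 H1 H2; simpl; [constructor|].
  destruct (r1 <=? 0) eqn:E; constructor.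
  - assert (r0 / r1 <= r0) by (apply Z.div_le_upper_bound; nia). lia.
  - pose proof (Z.mod_pos_bound r0 r1 ltac:(lia)). apply IH; lia.
Qed.

Lemma Mcf_bounds (d N : Z) : 2 <= N -> Z.gcd d N = 1 -> 1 <= Mcf d N <= N.
Proof.
  intros HN Hg. rewrite Mcf_eq by lia.
  pose proof (Z.mod_pos_bound d N ltac:(lia)).
  pose proof (mod_neq0_of_coprime d N HN Hg).
  split.
  - simpl. destruct (d mod N <=? 0) eqn:E; [lia|]. simpl.
    assert (1 <= N / (d mod N)) by (apply Z.div_le_lower_bound; lia). lia.
  - apply fold_max_le; [lia|]. apply cf_quots_bounded; lia.
Qed.

End ContinuedFractions.

Fixpoint fsum (f : nat -> R) (n : nat) : R :=
  match n with O => 0 | S n => fsum f n + f n end.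

Lemma fsum_ext f g n : (forall i, (i < n)%nat -> f i = g i) -> fsum f n = fsum g n.
Proof.
  induction n as [|n IH]; simpl; intros H; [reflexivity|].
  rewrite IH by (intros; apply H; lia). rewrite H by lia. reflexivity.
Qed.

Lemma fsum_le f g n : (forall i, (i < n)%nat -> f i <= g i) -> fsum f n <= fsum g n.
Proof.
  induction n as [|n IH]; simpl; intros H; [lra|].
  assert (f n <= g n) by (apply H; lia).
  assert (fsum f n <= fsum g n) by (apply IH; intros; apply H; lia). lra.
Qed.

Lemma fsum_zero n : fsum (fun _ => 0) n = 0.
Proof. induction n as [|n IH]; simpl; [|rewrite IH]; ring. Qed.

Lemma fsum_nonneg f n : (forall i, (i < n)%nat -> 0 <= f i) -> 0 <= fsum f n.
Proof. intros H. rewrite <- (fsum_zero n). apply fsum_le; auto. Qed.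

Lemma fsum_scal c f n : fsum (fun i => c * f i) n = c * fsum f n.
Proof. induction n as [|n IH]; simpl; [|rewrite IH]; ring. Qed.

Lemma fsum_plus f g n : fsum (fun i => f i + g i) n = fsum f n + fsum g n.
Proof. induction n as [|n IH]; simpl; [|rewrite IH]; ring. Qed.

Lemma fsum_add f a b : fsum f (a + b) = fsum f a + fsum (fun j => f (a + j)%nat) b.
Proof.
  induction b as [|b IH]; simpl; [rewrite Nat.add_0_r; ring|].
  rewrite Nat.add_succ_r. simpl. rewrite IH. ring.
Qed.

Lemma fsum_ge_term f n j : (forall i, 0 <= f i) -> (j < n)%nat -> f j <= fsum f n.
Proof.
  intros Hf Hj. replace n with (S j + (n - S j))%nat by lia.
  rewrite fsum_add. simpl fsum at 1.
  assert (0 <= fsum f j) by (apply fsum_nonneg; auto).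
  assert (0 <= fsum (fun i => f (S j + i)%nat) (n - S j)) by (apply fsum_nonneg; auto).
  lra.
Qed.

Lemma fsum_trunc f L N : (forall A, (L <= A)%nat -> f A = 0) -> (forall A, 0 <= f A) ->
  fsum f N <= fsum f L.
Proof.
  intros Hz Hp. destruct (Nat.le_gt_cases N L).
  - replace L with (N + (L - N))%nat by lia. rewrite fsum_add.
    assert (0 <= fsum (fun j => f (N + j)%nat) (L - N)) by (apply fsum_nonneg; auto). lra.
  - replace N with (L + (N - L))%nat by lia. rewrite fsum_add.
    rewrite (fsum_ext (fun j => f (L + j)%nat) (fun _ => 0)), fsum_zero
      by (intros; apply Hz; lia). lra.
Qed.

Lemma fsum_at_most_one (p : nat -> bool) (c : R) n : 0 <= c ->
  (forall a b, (a < n)%nat -> (b < n)%nat -> p a = true -> p b = true -> a = b) ->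
  fsum (fun a => if p a then c else 0) n <= c.
Proof.
  intros Hc. induction n as [|n IH]; simpl; intros H; [lra|].
  destruct (p n) eqn:Ep.
  - rewrite (fsum_ext _ (fun _ => 0)), fsum_zero; [lra|].
    intros i Hi. destruct (p i) eqn:Ei; auto.
    assert (i = n) by (apply H; auto; lia). lia.
  - enough (fsum (fun a => if p a then c else 0) n <= c) by lra.
    apply IH. intros; apply H; auto; lia.
Qed.

Lemma fsum_reindex_inj (f : nat -> nat) (g : nat -> R) (n : nat) : forall J (p : nat -> bool),
  (forall j, 0 <= g j) ->
  (forall a, (a < n)%nat -> p a = true -> (f a < J)%nat) ->
  (forall a b, (a < n)%nat -> (b < n)%nat -> p a = true -> p b = true -> f a = f b -> a = b) ->
  fsum (fun a => if p a then g (f a) else 0) n <= fsum g J.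
Proof.
  induction J as [|J IH]; intros p Hg Hf Hinj; simpl.
  - rewrite (fsum_ext _ (fun _ => 0)), fsum_zero; [lra|].
    intros i Hi. destruct (p i) eqn:E; auto. specialize (Hf i Hi E). lia.
  - set (below := fun a => (p a && (f a <? J)%nat)%bool).
    set (at_top := fun a => (p a && (f a =? J)%nat)%bool).
    rewrite (fsum_ext _ (fun a => (if below a then g (f a) else 0) +
                                 (if at_top a then g J else 0))).
    + rewrite fsum_plus.
      assert (fsum (fun a => if below a then g (f a) else 0) n <= fsum g J).
      { apply IH; auto; unfold below.
        - intros a Ha [_ H]%andb_prop. apply Nat.ltb_lt in H. auto.
        - intros a b Ha Hb [H1 _]%andb_prop [H2 _]%andb_prop. apply Hinj; auto. }
      assert (fsum (fun a => if at_top a then g J else 0) n <= g J).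
      { apply fsum_at_most_one; auto. unfold at_top.
        intros a b Ha Hb [H1 H1']%andb_prop [H2 H2']%andb_prop.
        apply Nat.eqb_eq in H1', H2'. apply Hinj; auto; lia. }
      lra.
    + intros i Hi. unfold below, at_top. destruct (p i) eqn:E; simpl; [|ring].
      specialize (Hf i Hi E).
      destruct (Nat.ltb_spec (f i) J), (Nat.eqb_spec (f i) J); try lia; subst; ring.
Qed.

Lemma fsum_periodic (g : nat -> R) (J L : nat) :
  fsum (fun j => g (j mod J)) (L * J) = INR L * fsum g J.
Proof.
  induction L as [|L IH]; [simpl; ring|].
  replace (S L * J)%nat with (L * J + J)%nat by lia. rewrite fsum_add, IH, S_INR.
  rewrite (fsum_ext (fun j => g ((L * J + j) mod J)) g); [ring|].
  intros i Hi. f_equal.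
  rewrite Nat.add_comm, Nat.Div0.mod_add. apply Nat.mod_small; auto.
Qed.

Lemma fsum_geom (r : R) N : 0 <= r < 1 -> fsum (fun A => r ^ A) N <= / (1 - r).
Proof.
  intros Hr. assert (E : fsum (fun A => r ^ A) N = (1 - r ^ N) / (1 - r)).
  { induction N as [|N IH]; simpl; [|rewrite IH]; field; lra. }
  rewrite E. unfold Rdiv. rewrite <- (Rmult_1_l (/ (1 - r))) at 2.
  apply Rmult_le_compat_r; [left; apply Rinv_0_lt_compat; lra|].
  pose proof (pow_le r N ltac:(lra)). lra.
Qed.

Lemma sum_n_fsum (h : nat -> R) N :
  sum_n (fun i => h (S i)) N = fsum (fun A => if (1 <=? A)%nat then h A else 0) (S (S N)).
Proof.
  induction N as [|N IH].
  - rewrite sum_O. simpl. ring.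
  - rewrite sum_Sn, IH. reflexivity.
Qed.

Lemma ln_le_sub_1 y : 0 < y -> ln y <= y - 1.
Proof.
  intros Hy. rewrite <- (exp_ln y) at 2 by exact Hy.
  pose proof (exp_ineq1_le (ln y)). lra.
Qed.

Lemma harmonic_le J : (1 <= J)%nat -> fsum (fun j => / (INR j + 1)) J <= 1 + ln (INR J).
Proof.
  induction J as [|J IH]; intros H; [lia|].
  destruct (Nat.eq_dec J 0) as [->|HJ0]; [simpl; rewrite ln_1; lra|].
  simpl fsum. specialize (IH ltac:(lia)).
  assert (HJ : 1 <= INR J) by (apply (le_INR 1); lia).
  rewrite S_INR.
  assert (Hln : ln (INR J / (INR J + 1)) <= INR J / (INR J + 1) - 1)
    by (apply ln_le_sub_1, Rdiv_lt_0_compat; lra).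
  unfold Rdiv in Hln. rewrite ln_mult, ln_Rinv in Hln by (try apply Rinv_0_lt_compat; lra).
  replace (INR J * / (INR J + 1) - 1) with (- / (INR J + 1)) in Hln by (field; lra).
  lra.
Qed.

(** * Distance to the nearest multiple *)

(* [mdist d N A = N ||A d / N||]; [mside] tells whether [A d] lies just above or
   just below a multiple of [N]. *)
Definition mres (d N : Z) (A : nat) : Z := ((Z.of_nat A * d) mod N)%Z.
Definition mdist (d N : Z) (A : nat) : Z := Z.min (mres d N A) (N - mres d N A).
Definition mside (d N : Z) (A : nat) : Z := if (2 * mres d N A <=? N)%Z then 0%Z else 1%Z.

Section NearestMultiple.
Local Open Scope Z_scope.
Variables d N : Z.
Hypothesis HN : 2 <= N.
Hypothesis Hg : Z.gcd d N = 1.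

Lemma not_divide_small (h : Z) : 0 < Z.abs h < N -> ~ (N | h * d).
Proof.
  intros Hh Hdiv. rewrite Z.mul_comm in Hdiv.
  apply Z.gauss in Hdiv; [|rewrite Z.gcd_comm; exact Hg].
  apply Z.divide_abs_r, Z.divide_pos_le in Hdiv; lia.
Qed.

Lemma mres_spec A : Z.of_nat A * d = N * (Z.of_nat A * d / N) + mres d N A /\ 0 <= mres d N A < N.
Proof. split; [apply Z.div_mod | apply Z.mod_pos_bound]; lia. Qed.

Lemma mres_pos A : (1 <= A)%nat -> Z.of_nat A < N -> 1 <= mres d N A.
Proof.
  intros H1 H2. destruct (mres_spec A) as [E B].
  destruct (Z.eq_dec (mres d N A) 0) as [E0|]; [|lia]. exfalso.
  apply (not_divide_small (Z.of_nat A)); [lia|].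
  exists (Z.of_nat A * d / N). lia.
Qed.

Lemma mdist_bounds A : (1 <= A)%nat -> Z.of_nat A < N -> 1 <= mdist d N A /\ 2 * mdist d N A <= N.
Proof.
  intros H1 H2. pose proof (mres_pos A H1 H2). pose proof (mres_spec A). unfold mdist. lia.
Qed.

Lemma mdist_repr A : exists l, mdist d N A = Z.abs (Z.of_nat A * d - l * N) /\
  Z.of_nat A * d - l * N = mres d N A - mside d N A * N.
Proof.
  destruct (mres_spec A) as [E B]. unfold mdist, mside.
  destruct (Z.leb_spec (2 * mres d N A) N).
  - exists (Z.of_nat A * d / N). lia.
  - exists (Z.of_nat A * d / N + 1). lia.
Qed.

Lemma mdist_lower A : (1 <= A)%nat -> Z.of_nat A < N ->
  N <= (Mcf d N + 2) * Z.of_nat A * mdist d N A.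
Proof.
  intros H1 H2. destruct (mdist_repr A) as [l [El _]]. rewrite El.
  pose proof (mdist_bounds A H1 H2).
  assert (Hd := Mcf_dioph d N (Z.of_nat A) l HN Hg ltac:(lia) ltac:(lia)).
  rewrite (Z.abs_eq (Z.of_nat A)) in Hd by lia. exact Hd.
Qed.

Lemma mdist_sep A1 A2 : (1 <= A1)%nat -> Z.of_nat A1 < N -> (1 <= A2)%nat -> Z.of_nat A2 < N ->
  A1 <> A2 -> mside d N A1 = mside d N A2 ->
  N <= (Mcf d N + 2) * Z.abs (Z.of_nat A1 - Z.of_nat A2) * Z.abs (mdist d N A1 - mdist d N A2).
Proof.
  intros H1 H2 H3 H4 Hne Hs.
  destruct (mdist_repr A1) as [l1 [E1 R1]], (mdist_repr A2) as [l2 [E2 R2]].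
  assert (Hx : Z.abs (mdist d N A1 - mdist d N A2)
             = Z.abs ((Z.of_nat A1 - Z.of_nat A2) * d - (l1 - l2) * N)).
  { pose proof (mres_spec A1). pose proof (mres_spec A2).
    unfold mdist, mside in *.
    destruct (Z.leb_spec (2 * mres d N A1) N), (Z.leb_spec (2 * mres d N A2) N); lia. }
  rewrite Hx. apply Mcf_dioph; auto; [lia|].
  intros H0. apply (not_divide_small (Z.of_nat A1 - Z.of_nat A2)); [lia|].
  exists (l1 - l2). lia.
Qed.

End NearestMultiple.

Lemma split_key_eq (a a' b b' J : nat) : (b < J)%nat -> (b' < J)%nat ->
  (a * J + b = a' * J + b')%nat -> a = a' /\ b = b'.
Proof.
  intros H1 H2 H. destruct (Nat.lt_total a a') as [Hl|[He|Hl]]; [|subst; lia|]; exfalso.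
  - assert (a * J + J <= a' * J)%nat by nia. lia.
  - assert (a' * J + J <= a * J)%nat by nia. lia.
Qed.

Section Buckets.
Variables d N : Z.
Hypothesis HN : (2 <= N)%Z.
Hypothesis Hg : Z.gcd d N = 1%Z.

Definition dyadic (A : nat) : Z := Z.of_nat (2 ^ Nat.log2 A).
Definition bucket (A : nat) : Z := (mdist d N A * (Mcf d N + 2) * dyadic A / N)%Z.
Definition nbuckets : nat := Z.to_nat (2 * (Mcf d N + 2) * N + 2).
(* By [mdist_sep], two [A < N] in the same dyadic block, on the same side and
   with [mdist] in the same interval of length [N / ((M + 2) 2^j)] coincide. *)
Definition key (A : nat) : nat :=
  (Nat.log2 A * nbuckets + Z.to_nat (2 * bucket A + mside d N A))%nat.

Lemma dyadic_spec A : (1 <= A)%nat ->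
  (1 <= dyadic A <= Z.of_nat A)%Z /\ (Z.of_nat A < 2 * dyadic A)%Z.
Proof.
  intros H. unfold dyadic. pose proof (Nat.log2_spec A ltac:(lia)) as [H1 H2].
  rewrite Nat.pow_succ_r' in H2. pose proof (Nat.pow_nonzero 2 (Nat.log2 A)). lia.
Qed.

Lemma bucket_spec A : (N * bucket A <= mdist d N A * (Mcf d N + 2) * dyadic A < N * (bucket A + 1)
  /\ 0 <= bucket A)%Z.
Proof.
  unfold bucket. set (X := (mdist d N A * (Mcf d N + 2) * dyadic A)%Z).
  pose proof (Z.div_mod X N ltac:(lia)). pose proof (Z.mod_pos_bound X N ltac:(lia)).
  split; [lia|]. apply Z.div_pos; [|lia].
  pose proof (mres_spec d N HN A). pose proof (Mcf_bounds d N HN Hg).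
  unfold X, mdist, dyadic. apply Z.mul_nonneg_nonneg; [apply Z.mul_nonneg_nonneg|]; lia.
Qed.

Lemma mside_01 A : (mside d N A = 0 \/ mside d N A = 1)%Z.
Proof. unfold mside. destruct (2 * mres d N A <=? N)%Z; auto. Qed.

Lemma bucket_le A : (1 <= A)%nat -> (Z.of_nat A < N)%Z -> (bucket A <= (Mcf d N + 2) * N)%Z.
Proof.
  intros H1 H2. pose proof (bucket_spec A). pose proof (dyadic_spec A H1).
  pose proof (mdist_bounds d N HN Hg A H1 H2). pose proof (Mcf_bounds d N HN Hg).
  assert (mdist d N A * (Mcf d N + 2) * dyadic A <= N * (Mcf d N + 2) * N)%Z
    by (apply Z.mul_le_mono_nonneg; try apply Z.mul_le_mono_nonneg_r; lia).
  nia.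
Qed.

Lemma key_mod A : (1 <= A)%nat -> (Z.of_nat A < N)%Z ->
  (key A mod nbuckets = Z.to_nat (2 * bucket A + mside d N A))%nat.
Proof.
  intros H1 H2. unfold key.
  pose proof (bucket_le A H1 H2). pose proof (bucket_spec A). pose proof (mside_01 A).
  pose proof (Mcf_bounds d N HN Hg).
  rewrite Nat.add_comm, Nat.Div0.mod_add. apply Nat.mod_small. unfold nbuckets. lia.
Qed.

Lemma key_lt A : (1 <= A)%nat -> (Z.of_nat A < N)%Z ->
  (key A < (Nat.log2 (Z.to_nat N) + 1) * nbuckets)%nat.
Proof.
  intros H1 H2. unfold key.
  pose proof (bucket_le A H1 H2). pose proof (bucket_spec A). pose proof (mside_01 A).
  pose proof (Mcf_bounds d N HN Hg).
  assert (Nat.log2 A <= Nat.log2 (Z.to_nat N))%nat by (apply Nat.log2_le_mono; lia).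
  assert (Z.to_nat (2 * bucket A + mside d N A) < nbuckets)%nat by (unfold nbuckets; lia).
  nia.
Qed.

Lemma key_inj A1 A2 :
  (1 <= A1)%nat -> (Z.of_nat A1 < N)%Z -> (1 <= A2)%nat -> (Z.of_nat A2 < N)%Z ->
  key A1 = key A2 -> A1 = A2.
Proof.
  intros H1 H2 H3 H4 Hk. unfold key in Hk.
  pose proof (bucket_le A1 H1 H2). pose proof (bucket_spec A1). pose proof (mside_01 A1).
  pose proof (bucket_le A2 H3 H4). pose proof (bucket_spec A2). pose proof (mside_01 A2).
  pose proof (Mcf_bounds d N HN Hg).
  apply split_key_eq in Hk as [Hl Hb]; [|unfold nbuckets; lia..].
  assert (Ek : bucket A1 = bucket A2) by lia.
  assert (Es : mside d N A1 = mside d N A2) by lia.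
  assert (ET : dyadic A1 = dyadic A2) by (unfold dyadic; rewrite Hl; reflexivity).
  destruct (Nat.eq_dec A1 A2) as [|Hne]; [assumption|exfalso].
  pose proof (mdist_sep d N HN Hg A1 A2 H1 H2 H3 H4 Hne Es) as Hs.
  pose proof (dyadic_spec A1 H1). pose proof (dyadic_spec A2 H3).
  set (T := dyadic A1) in *. set (D1 := mdist d N A1) in *. set (D2 := mdist d N A2) in *.
  set (M := Mcf d N) in *.
  assert (Hh : (Z.abs (Z.of_nat A1 - Z.of_nat A2) <= T - 1)%Z) by lia.
  assert (HD : (Z.abs (D1 - D2) * (M + 2) * T < N)%Z).
  { rewrite <- ET in *. destruct (Z.le_gt_cases D1 D2).
    - rewrite Z.abs_neq by lia. nia.
    - rewrite Z.abs_eq by lia. nia. }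
  assert ((M + 2) * Z.abs (Z.of_nat A1 - Z.of_nat A2) * Z.abs (D1 - D2)
          <= (M + 2) * (T - 1) * Z.abs (D1 - D2))%Z
    by (apply Z.mul_le_mono_nonneg_r; [lia|]; apply Z.mul_le_mono_nonneg_l; lia).
  set (X := Z.abs (D1 - D2)) in *.
  assert (0 <= (M + 2) * X)%Z by (apply Z.mul_nonneg_nonneg; lia).
  replace (X * (M + 2) * T)%Z with ((M + 2) * (T - 1) * X + (M + 2) * X)%Z in HD by ring.
  lia.
Qed.

(* Indexed by [key A mod nbuckets = 2 * bucket A + mside d N A]. *)
Definition half_harmonic (j : nat) : R := / (INR (j / 2) + 1).

Lemma half_harmonic_pos j : 0 < half_harmonic j.
Proof. unfold half_harmonic. apply Rinv_0_lt_compat. pose proof (pos_INR (j / 2)). lra. Qed.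

Lemma inv_mdist_le_key A : (1 <= A)%nat -> (Z.of_nat A < N)%Z ->
  / (INR A * IZR (mdist d N A))
  <= (2 * (IZR (Mcf d N) + 2) / IZR N) * half_harmonic (key A mod nbuckets).
Proof.
  intros H1 H2. unfold half_harmonic. rewrite key_mod by auto.
  pose proof (bucket_le A H1 H2). pose proof (bucket_spec A). pose proof (mside_01 A) as Hs.
  pose proof (mdist_bounds d N HN Hg A H1 H2). pose proof (Mcf_bounds d N HN Hg).
  pose proof (mdist_lower d N HN Hg A H1 H2).
  replace (Z.to_nat (2 * bucket A + mside d N A) / 2)%nat with (Z.to_nat (bucket A)).
  2:{ destruct Hs as [-> | ->].
      - replace (2 * bucket A + 0)%Z with (Z.of_nat (Z.to_nat (bucket A) * 2)) by lia.
        rewrite Nat2Z.id, Nat.div_mul; lia.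
      - replace (2 * bucket A + 1)%Z with (Z.of_nat (1 + Z.to_nat (bucket A) * 2)) by lia.
        rewrite Nat2Z.id, Nat.div_add; simpl; lia. }
  rewrite (INR_IZR_INZ (Z.to_nat (bucket A))), Z2Nat.id by lia.
  assert (Hint : ((bucket A + 1) * N <= 2 * (Mcf d N + 2) * (Z.of_nat A * mdist d N A))%Z).
  { pose proof (dyadic_spec A H1).
    assert (dyadic A * mdist d N A * (Mcf d N + 2) <= Z.of_nat A * mdist d N A * (Mcf d N + 2))%Z
      by (apply Z.mul_le_mono_nonneg_r; [|apply Z.mul_le_mono_nonneg_r]; lia).
    lia. }
  apply IZR_le in Hint. rewrite !mult_IZR, !plus_IZR, <- INR_IZR_INZ in Hint.
  assert (0 < INR A) by (apply (lt_INR 0); lia).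
  assert (1 <= IZR (mdist d N A)) by (apply IZR_le; lia).
  assert (2 <= IZR N) by (apply IZR_le; lia).
  assert (0 <= IZR (bucket A)) by (apply IZR_le; lia).
  assert (1 <= IZR (Mcf d N)) by (apply IZR_le; lia).
  replace (2 * (IZR (Mcf d N) + 2) / IZR N * / (IZR (bucket A) + 1))
    with (/ (IZR N * (IZR (bucket A) + 1) / (2 * (IZR (Mcf d N) + 2)))) by (field; lra).
  apply Rinv_le_contravar; [apply Rdiv_lt_0_compat; nra|].
  apply Rmult_le_reg_r with (2 * (IZR (Mcf d N) + 2)); [lra|].
  unfold Rdiv. rewrite Rmult_assoc, Rinv_l by lra. simpl (IZR 2) in Hint. lra.
Qed.

End Buckets.

Lemma ln_gt_half x : 2 <= x -> / 2 < ln x.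
Proof. intros H. pose proof ln_lt_2. pose proof (ln_le 2 x ltac:(lra) H). lra. Qed.

Lemma log2_succ_le_ln (N : Z) : (2 <= N)%Z -> INR (Nat.log2 (Z.to_nat N) + 1) <= 4 * ln (IZR N).
Proof.
  intros HN. assert (HNr : 2 <= IZR N) by (apply IZR_le; lia).
  pose proof (ln_gt_half _ HNr). pose proof ln_lt_2.
  rewrite plus_INR. simpl (INR 1).
  pose proof (Nat.log2_spec (Z.to_nat N) ltac:(lia)) as [Hp _].
  apply le_INR in Hp. rewrite pow_INR, (INR_IZR_INZ (Z.to_nat N)), Z2Nat.id in Hp by lia.
  replace (INR 2) with 2 in Hp by (simpl; ring).
  apply ln_le in Hp; [|apply pow_lt; lra]. rewrite ln_pow in Hp by lra.
  pose proof (pos_INR (Nat.log2 (Z.to_nat N))).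
  assert (0 <= INR (Nat.log2 (Z.to_nat N)) * (ln 2 - / 2)) by (apply Rmult_le_pos; lra).
  lra.
Qed.

Lemma sum_half_harmonic_le J : (1 <= J)%nat -> fsum half_harmonic J <= 2 * (1 + ln (INR J)).
Proof.
  intros HJ. apply Rle_trans with (fsum (fun j => 2 * / (INR j + 1)) J).
  - apply fsum_le. intros i _. unfold half_harmonic.
    pose proof (Nat.div_mod i 2 ltac:(lia)). pose proof (Nat.mod_upper_bound i 2 ltac:(lia)).
    assert (Hi : INR i + 1 <= 2 * (INR (i / 2) + 1)).
    { assert (i <= 2 * (i / 2) + 1)%nat as Hle by lia.
      apply le_INR in Hle. rewrite plus_INR, mult_INR in Hle.
      simpl (INR 2) in Hle. simpl (INR 1) in Hle. lra. }
    pose proof (pos_INR i).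
    replace (2 * / (INR i + 1)) with (/ ((INR i + 1) / 2)) by (field; lra).
    apply Rinv_le_contravar; lra.
  - rewrite fsum_scal. pose proof (harmonic_le J HJ). lra.
Qed.

Section SumInvMdist.
Variables d N : Z.
Hypothesis HN : (2 <= N)%Z.
Hypothesis Hg : Z.gcd d N = 1%Z.

Lemma sum_inv_mdist_le_buckets :
  fsum (fun A => if (1 <=? A)%nat then / (INR A * IZR (mdist d N A)) else 0) (Z.to_nat N)
  <= 2 * (IZR (Mcf d N) + 2) / IZR N
     * (INR (Nat.log2 (Z.to_nat N) + 1) * fsum half_harmonic (nbuckets d N)).
Proof.
  assert (HC : 0 <= 2 * (IZR (Mcf d N) + 2) / IZR N).
  { pose proof (Mcf_bounds d N HN Hg). assert (1 <= IZR (Mcf d N)) by (apply IZR_le; lia).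
    apply Rdiv_le_0_compat; [lra|apply IZR_lt; lia]. }
  rewrite <- fsum_periodic, <- fsum_scal.
  apply Rle_trans with (2 * (IZR (Mcf d N) + 2) / IZR N *
    fsum (fun A => if (1 <=? A)%nat then half_harmonic (key d N A mod nbuckets d N) else 0)
         (Z.to_nat N)).
  - rewrite <- fsum_scal. apply fsum_le. intros i Hi.
    destruct (Nat.leb_spec 1 i); [apply inv_mdist_le_key; auto; lia | lra].
  - rewrite fsum_scal. apply Rmult_le_compat_l; [exact HC|].
    apply (fsum_reindex_inj (key d N) (fun j => half_harmonic (j mod nbuckets d N))).
    + intros j. left. apply half_harmonic_pos.
    + intros a Ha H%Nat.leb_le. apply key_lt; auto. lia.
    + intros a b Ha Hb H1%Nat.leb_le H2%Nat.leb_le. apply key_inj; auto; lia.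
Qed.

Lemma sum_inv_mdist_le :
  fsum (fun A => if (1 <=? A)%nat then / (INR A * IZR (mdist d N A)) else 0) (Z.to_nat N)
  <= 480 * IZR (Mcf d N) * ln (IZR N) ^ 2 / IZR N.
Proof.
  pose proof (Mcf_bounds d N HN Hg) as HM.
  assert (HNr : 2 <= IZR N) by (apply IZR_le; lia).
  assert (HMr : 1 <= IZR (Mcf d N) <= IZR N) by (split; apply IZR_le; lia).
  pose proof (ln_gt_half _ HNr) as HlnN.
  set (J := nbuckets d N).
  assert (HJ1 : (1 <= J)%nat) by (unfold J, nbuckets; lia).
  assert (HJ : 1 + ln (INR J) <= 10 * ln (IZR N)).
  { assert (HJN : INR J <= 2 ^ 3 * IZR N ^ 2).
    { unfold J, nbuckets. rewrite INR_IZR_INZ, Z2Nat.id by lia.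
      rewrite plus_IZR, !mult_IZR, plus_IZR. simpl IZR. nra. }
    apply ln_le in HJN; [|apply (lt_INR 0); lia].
    rewrite ln_mult, !ln_pow in HJN by (try apply pow_lt; lra).
    pose proof ln_lt_2. pose proof (ln_le 2 (IZR N) ltac:(lra) HNr). simpl INR in HJN. lra. }
  pose proof (sum_half_harmonic_le J HJ1) as HH.
  pose proof (log2_succ_le_ln N HN) as HL.
  assert (0 <= fsum half_harmonic J) by (apply fsum_nonneg; intros; left; apply half_harmonic_pos).
  eapply Rle_trans; [apply sum_inv_mdist_le_buckets|]. fold J.
  apply Rle_trans with ((6 * IZR (Mcf d N) / IZR N) * ((4 * ln (IZR N)) * (2 * (10 * ln (IZR N))))).
  - apply Rmult_le_compat.
    + apply Rdiv_le_0_compat; lra.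
    + apply Rmult_le_pos; [apply pos_INR | assumption].
    + unfold Rdiv. apply Rmult_le_compat_r; [left; apply Rinv_0_lt_compat|]; lra.
    + apply Rmult_le_compat; [apply pos_INR | exact H | exact HL | lra].
  - apply Req_le. field. lra.
Qed.

End SumInvMdist.

(** * Dirichlet characters and the exponential [e] *)

Section DirichletCharacter.
Variables (q : nat) (chi : Z -> C).
Hypothesis Hchi : is_dirichlet_char q chi.

Lemma dirichlet_char_mod (n : Z) : chi n = chi (n mod Z.of_nat q)%Z.
Proof.
  destruct Hchi as [Hq [_ [_ [Hper _]]]].
  assert (Hk : forall (k : nat) (m : Z), chi (m + Z.of_nat k * Z.of_nat q)%Z = chi m).
  { induction k as [|k IH]; intros m; [f_equal; lia|].
    rewrite <- (IH m), <- (Hper (m + Z.of_nat k * Z.of_nat q)%Z). f_equal. lia. }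
  pose proof (Z.div_mod n (Z.of_nat q) ltac:(lia)) as E.
  destruct (Z.le_gt_cases 0 (n / Z.of_nat q)).
  - rewrite <- (Hk (Z.to_nat (n / Z.of_nat q)) (n mod Z.of_nat q)%Z). f_equal. lia.
  - rewrite <- (Hk (Z.to_nat (- (n / Z.of_nat q))) n). f_equal. lia.
Qed.

Lemma dirichlet_char_bounded (n : Z) : Cmod (chi n) <= fsum (fun j => Cmod (chi (Z.of_nat j))) q.
Proof.
  rewrite dirichlet_char_mod. destruct Hchi as [Hq _].
  pose proof (Z.mod_pos_bound n (Z.of_nat q) ltac:(lia)).
  rewrite <- (Z2Nat.id (n mod Z.of_nat q)) by lia.
  apply (fsum_ge_term (fun j => Cmod (chi (Z.of_nat j)))); [intros; apply Cmod_ge_0 | lia].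
Qed.

Lemma dirichlet_char_pow (n : Z) (j : nat) : chi (n ^ Z.of_nat j)%Z = Cpow (chi n) j.
Proof.
  destruct Hchi as [_ [H1 [Hm _]]].
  induction j as [|j IH]; [exact H1|].
  rewrite Nat2Z.inj_succ, Z.pow_succ_r, Hm, IH by lia. simpl. ring.
Qed.

(* A value of modulus [1 + t > 1] would make [|chi (n^j)| >= 1 + j t] unbounded. *)
Lemma dirichlet_char_norm_le_1 (n : Z) : Cmod (chi n) <= 1.
Proof.
  set (K := fsum (fun j => Cmod (chi (Z.of_nat j))) q).
  destruct (Rle_lt_dec (Cmod (chi n)) 1) as [H|H]; [exact H|exfalso].
  set (t := Cmod (chi n) - 1).
  assert (HK : 0 <= K) by (apply fsum_nonneg; intros; apply Cmod_ge_0).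
  destruct (archimed (K / t)) as [Har _].
  assert (HKt : 0 <= K / t) by (apply Rdiv_le_0_compat; unfold t; lra).
  set (j := Z.to_nat (up (K / t))).
  assert (Hj : K / t < INR j)
    by (unfold j; rewrite INR_IZR_INZ, Z2Nat.id; [lra|apply le_IZR; lra]).
  pose proof (dirichlet_char_bounded (n ^ Z.of_nat j)%Z) as Hb. fold K in Hb.
  rewrite dirichlet_char_pow, Cmod_pow in Hb.
  pose proof (Rle_pow_lin t j ltac:(unfold t; lra)) as Hlin.
  replace (1 + t) with (Cmod (chi n)) in Hlin by (unfold t; ring).
  assert (K < INR j * t).
  { apply Rmult_lt_reg_r with (/ t); [apply Rinv_0_lt_compat; unfold t; lra|].
    rewrite Rmult_assoc, Rinv_r by (unfold t; lra). lra. }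
  lra.
Qed.

Lemma nontrivial_char_modulus_ge_2 : nontrivial_char chi -> (2 <= q)%nat.
Proof.
  intros [n [Hn0 Hn1]]. destruct Hchi as [Hq [H1 _]].
  destruct (Nat.eq_dec q 1) as [E|E]; [exfalso|lia]. apply Hn1.
  rewrite dirichlet_char_mod, E, Z.mod_1_r, <- H1, (dirichlet_char_mod 1), E. reflexivity.
Qed.

End DirichletCharacter.

Lemma e_add w1 w2 : e (w1 + w2)%C = (e w1 * e w2)%C.
Proof.
  destruct w1 as [a b], w2 as [c d]. unfold e, Cmult. simpl.
  replace (-2 * PI * (b + d)) with (-2 * PI * b + -2 * PI * d) by ring.
  replace (2 * PI * (a + c)) with (2 * PI * a + 2 * PI * c) by ring.
  rewrite exp_plus, cos_plus, sin_plus. f_equal; ring.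
Qed.

Lemma e_0 : e 0%C = 1%C.
Proof.
  unfold e. simpl. rewrite !Rmult_0_r, exp_0, cos_0, sin_0.
  apply injective_projections; simpl; ring.
Qed.

Lemma e_nat_mul (w : C) (B : nat) : e (RtoC (INR B) * w)%C = Cpow (e w) B.
Proof.
  induction B as [|B IH].
  - replace (RtoC (INR 0) * w)%C with (RtoC 0) by (apply injective_projections; simpl; ring).
    apply e_0.
  - rewrite S_INR.
    replace (RtoC (INR B + 1) * w)%C with (RtoC (INR B) * w + w)%C
      by (apply injective_projections; simpl; ring).
    rewrite e_add, IH. simpl. ring.
Qed.

Lemma Cmod_e w : Cmod (e w) = exp (-2 * PI * Im w).
Proof.
  unfold e, Cmod. cbn [fst snd].
  set (r := exp (-2 * PI * Im w)). set (u := 2 * PI * Re w).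
  replace ((r * cos u) ^ 2 + (r * sin u) ^ 2) with (r ^ 2 * (sin u ^ 2 + cos u ^ 2)) by ring.
  rewrite <- !Rsqr_pow2, sin2_cos2, Rmult_1_r, Rsqr_pow2.
  apply sqrt_pow2. left; apply exp_pos.
Qed.

Lemma is_series_Re_Im (f : nat -> C) (l : C) : is_series f l ->
  is_series (fun i => Re (f i)) (Re l) /\ is_series (fun i => Im (f i)) (Im l).
Proof.
  intros H. pose proof (proj1 (filterlim_locally (F := eventually) _ _) H) as Hl.
  assert (HRe : forall N, Re (sum_n f N) = sum_n (fun i => Re (f i)) N).
  { induction N as [|N IH]; [rewrite !sum_O | rewrite !sum_Sn, <- IH]; reflexivity. }
  assert (HIm : forall N, Im (sum_n f N) = sum_n (fun i => Im (f i)) N).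
  { induction N as [|N IH]; [rewrite !sum_O | rewrite !sum_Sn, <- IH]; reflexivity. }
  split; apply (filterlim_locally (F := eventually)); intros eps;
    (eapply filter_imp; [|exact (Hl eps)]); intros N [H1 H2].
  - rewrite <- HRe. exact H1.
  - rewrite <- HIm. exact H2.
Qed.

Lemma CSeries_correct (f : nat -> C) (l : C) : is_series f l -> CSeries f = l.
Proof.
  intros H. destruct (is_series_Re_Im f l H) as [H1 H2]. unfold CSeries.
  rewrite (is_series_unique _ _ H1), (is_series_unique _ _ H2). destruct l; reflexivity.
Qed.

Lemma Cmod_sum_n_le (f : nat -> C) N : Cmod (sum_n f N) <= sum_n (fun i => Cmod (f i)) N.
Proof.
  induction N as [|N IH]; [rewrite !sum_O; lra|]. rewrite !sum_Sn.
  eapply Rle_trans; [apply Cmod_triangle|]. apply Rplus_le_compat_r, IH.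
Qed.

Lemma Cmod_series_le (f : nat -> C) (l : C) (L : R) : is_series f l ->
  (forall N, Cmod (sum_n f N) <= L) -> Cmod l <= L.
Proof.
  intros H HB. destruct (Rle_lt_dec (Cmod l) L) as [|Hlt]; [assumption|exfalso].
  pose proof (proj1 (@filterlim_locally_ball_norm C_AbsRing _ C_NormedModule eventually _ _ _) H)
    as Hl.
  destruct (Hl (mkposreal (Cmod l - L) ltac:(lra))) as [N0 HN0].
  specialize (HN0 N0 (le_n _)). specialize (HB N0).
  change (Cmod (minus (sum_n f N0) l) < Cmod l - L) in HN0.
  pose proof (Cmod_triangle (sum_n f N0) (- minus (sum_n f N0) l)%C) as Ht.
  rewrite Cmod_opp in Ht.
  replace (sum_n f N0 + - minus (sum_n f N0) l)%C with l in Ht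
    by (unfold minus, plus, opp; simpl; apply injective_projections; simpl; ring).
  lra.
Qed.

Lemma ex_series_C_le (f : nat -> C) (b : nat -> R) : (forall n, Cmod (f n) <= b n) ->
  ex_series b -> exists l, is_series f l.
Proof. apply (@ex_series_le C_AbsRing C_CompleteNormedModule). Qed.

(** * Power series with periodic times polynomial coefficients *)

(* For a polynomial [p] this says [deg p < j]. *)
Fixpoint diff_annihilated (j : nat) (p : R -> R) : Prop :=
  match j with
  | O => forall x, p x = 0
  | S j => forall h, diff_annihilated j (fun x => p x - p (x - h))
  end.

Lemma diff_annihilated_ext j : forall p r, (forall x, p x = r x) ->
  diff_annihilated j p -> diff_annihilated j r.
Proof.
  induction j as [|j IH]; simpl; intros p r E H.
  - intros x. rewrite <- E. auto.
  - intros h. apply (IH (fun x => p x - p (x - h))); auto. intros x. rewrite !E. reflexivity.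
Qed.

Lemma diff_annihilated_plus j : forall p r, diff_annihilated j p -> diff_annihilated j r ->
  diff_annihilated j (fun x => p x + r x).
Proof.
  induction j as [|j IH]; simpl; intros p r Hp Hr.
  - intros x. rewrite Hp, Hr. ring.
  - intros h. eapply diff_annihilated_ext; [|apply (IH _ _ (Hp h) (Hr h))]. intros x; simpl; ring.
Qed.

Lemma diff_annihilated_scal j : forall a p, diff_annihilated j p ->
  diff_annihilated j (fun x => a * p x).
Proof.
  induction j as [|j IH]; simpl; intros a p Hp.
  - intros x. rewrite Hp. ring.
  - intros h. eapply diff_annihilated_ext; [|apply (IH a _ (Hp h))]. intros x; simpl; ring.
Qed.

Lemma diff_annihilated_S j : forall p, diff_annihilated j p -> diff_annihilated (S j) p.
Proof.
  induction j as [|j IH]; simpl; intros p Hp.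
  - intros h x. rewrite !Hp. ring.
  - intros h. apply IH, Hp.
Qed.

Lemma diff_annihilated_le i j p : (i <= j)%nat -> diff_annihilated i p -> diff_annihilated j p.
Proof. induction 1; auto using diff_annihilated_S. Qed.

Lemma diff_annihilated_sum j (f : nat -> R -> R) n :
  (forall i, (i <= n)%nat -> diff_annihilated j (f i)) ->
  diff_annihilated j (fun x => sum_f_R0 (fun i => f i x) n).
Proof.
  induction n as [|n IH]; intros H; simpl; [apply H; lia|].
  apply diff_annihilated_plus; [apply IH; intros; apply H|apply H]; lia.
Qed.

(* The difference of [x^m] is, by the binomial formula, a combination of [x^i], [i < m]. *)
Lemma diff_annihilated_pow m : diff_annihilated (S m) (fun y => y ^ m).
Proof.
  induction m as [m IH] using lt_wf_ind.
  destruct m as [|m']; [simpl; intros h x; ring|].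
  intro h. change (diff_annihilated (S m') (fun x => x ^ S m' - (x - h) ^ S m')).
  apply (diff_annihilated_ext _
    (fun y => -1 * sum_f_R0 (fun i => Binomial.C (S m') i * (- h) ^ (S m' - i) * y ^ i) m')).
  - intros y. rewrite (Rminus_def y h), binomial, tech5, C_n_n, Nat.sub_diag, pow_O.
    rewrite (sum_eq (fun i => Binomial.C (S m') i * y ^ i * (- h) ^ (S m' - i))
                    (fun i => Binomial.C (S m') i * (- h) ^ (S m' - i) * y ^ i)) by (intros; ring).
    ring.
  - apply diff_annihilated_scal, diff_annihilated_sum. intros i Hi.
    apply diff_annihilated_scal, (diff_annihilated_le (S i)); [lia|]. apply IH. lia.
Qed.

Lemma is_series_unique_C (w : nat -> C) l1 l2 : is_series w l1 -> is_series w l2 -> l1 = l2.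
Proof. apply (filterlim_locally_unique (F := eventually)). Qed.

Lemma is_series_finite_support (w : nat -> C) L : (forall B, (L < B)%nat -> w B = RtoC 0) ->
  is_series w (sum_n w L).
Proof.
  intros H.
  assert (Hconst : forall N, (L <= N)%nat -> sum_n w N = sum_n w L).
  { induction 1 as [|N HN IH]; [reflexivity|]. rewrite sum_Sn, IH, H by lia.
    apply injective_projections; simpl; ring. }
  apply (proj2 (@filterlim_locally_ball_norm C_AbsRing _ C_NormedModule eventually _ _ _)).
  intros eps. exists L. intros N HN.
  change (Cmod (minus (sum_n w N) (sum_n w L)) < eps). rewrite (Hconst N HN).
  rewrite minus_eq_zero. change (Cmod (RtoC 0) < eps). rewrite Cmod_0. apply cond_pos.
Qed.

Lemma is_series_shift (a : nat -> C) (l : C) (q : nat) : is_series a l ->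
  is_series (fun B => if (q <=? B)%nat then a (B - q)%nat else RtoC 0) l.
Proof.
  intros H. induction q as [|q IH].
  - eapply is_series_ext; [|exact H]. intros n. simpl. rewrite Nat.sub_0_r. reflexivity.
  - apply is_series_decr_1. simpl.
    match goal with |- is_series _ ?L => replace L with l end;
      [|apply injective_projections; simpl; ring].
    eapply is_series_ext; [|exact IH]. reflexivity.
Qed.

Lemma is_series_sub_shift (u : nat -> C) (x l : C) (q : nat) :
  is_series (fun B => (u B * Cpow x B)%C) l ->
  is_series (fun B => ((u B - (if (q <=? B)%nat then u (B - q)%nat else RtoC 0)) * Cpow x B)%C)
            ((1 - Cpow x q) * l)%C.
Proof.
  intros Hs.
  pose proof (is_series_scal (K := C_AbsRing) (Cpow x q) _ _ (is_series_shift _ _ q Hs)) as H2.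
  pose proof (is_series_minus _ _ _ _ Hs H2) as H3.
  replace ((1 - Cpow x q) * l)%C with (plus l (opp (scal (Cpow x q) l)))
    by (unfold plus, opp, scal; simpl; change (@mult C_Ring) with Cmult; ring).
  eapply is_series_ext; [|exact H3]. intros B.
  unfold plus, opp, scal; simpl. change (@mult C_Ring) with Cmult.
  destruct (Nat.leb_spec q B).
  - replace (Cpow x B) with (Cpow x q * Cpow x (B - q))%C
      by (rewrite <- Cpow_add_r; f_equal; lia).
    change (u B * (x ^ q * x ^ (B - q)) + - (x ^ q * (u (B - q)%nat * x ^ (B - q)))
            = (u B - u (B - q)%nat) * (x ^ q * x ^ (B - q)))%C. ring.
  - change (u B * x ^ B + - (x ^ q * RtoC 0) = (u B - RtoC 0) * x ^ B)%C. ring.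
Qed.

Lemma sum_n_Rle (a b : nat -> R) N : (forall i, (i <= N)%nat -> a i <= b i) ->
  sum_n a N <= sum_n b N.
Proof.
  induction N as [|N IH]; intros H; [rewrite !sum_O; apply H; lia|].
  rewrite !sum_Sn. apply Rplus_le_compat; [apply IH; intros; apply H|apply H]; lia.
Qed.

Lemma Cmod_1_sub_pow_pos (x : C) (q : nat) : (1 <= q)%nat -> Cmod x < 1 ->
  0 < Cmod (1 - Cpow x q)%C.
Proof.
  intros Hq Hx. apply Cmod_gt_0. intro H.
  assert (E : Cpow x q = 1%C) by (replace (Cpow x q) with (1 - (1 - Cpow x q))%C by ring;
                                   rewrite H; ring).
  pose proof (f_equal Cmod E) as Em. rewrite Cmod_pow, Cmod_1 in Em.
  pose proof (pow_lt_1_compat (Cmod x) q (conj (Cmod_ge_0 x) Hx) ltac:(lia)). lra.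
Qed.

Lemma sum_n_nonneg (a : nat -> R) N : (forall i, 0 <= a i) -> 0 <= sum_n a N.
Proof.
  intros H. induction N as [|N IH]; [rewrite sum_O; apply H|].
  rewrite sum_Sn. apply Rplus_le_le_0_compat; auto.
Qed.

Lemma pow_le_1 (x : R) (n : nat) : 0 <= x <= 1 -> x ^ n <= 1.
Proof. intros H. rewrite <- (pow1 n). apply pow_incr. exact H. Qed.

Section PeriodicTimesPoly.
Variables (q : nat) (c : Z -> C).
Hypothesis Hq : (1 <= q)%nat.
Hypothesis Hper : forall n, c (n + Z.of_nat q)%Z = c n.

Definition periodic_times_poly (j : nat) (u : nat -> C) : Prop :=
  u 0%nat = RtoC 0 /\ exists L p, diff_annihilated j p /\
    forall B, (L <= B)%nat -> u B = (c (Z.of_nat B) * RtoC (p (INR B)))%C.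

Lemma periodic_times_poly_sub_shift j u : periodic_times_poly (S j) u ->
  periodic_times_poly j (fun B => (u B - (if (q <=? B)%nat then u (B - q)%nat else RtoC 0))%C).
Proof.
  intros [Hu0 [L [p [Hp HuL]]]]. split.
  - rewrite Hu0. destruct (Nat.leb_spec q 0); [lia|]. ring.
  - exists (L + q)%nat, (fun y => p y - p (y - INR q)). split; [apply Hp|].
    intros B HB. destruct (Nat.leb_spec q B); [|lia].
    rewrite !HuL, minus_INR by lia.
    replace (c (Z.of_nat (B - q))) with (c (Z.of_nat B))
      by (rewrite <- (Hper (Z.of_nat (B - q))); f_equal; lia).
    rewrite RtoC_minus. ring.
Qed.

(* Multiplying by [(1 - x^q)^j] kills all but finitely many coefficients. *)
Lemma periodic_times_poly_series_bound j u : periodic_times_poly j u ->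
  exists C0, 0 <= C0 /\ forall x l, Cmod x < 1 ->
    is_series (fun B => (u B * Cpow x B)%C) l ->
    Cmod l <= C0 * Cmod x / Cmod (1 - Cpow x q)%C ^ j.
Proof.
  revert u. induction j as [|j IH]; intros u Hu.
  - destruct Hu as [Hu0 [L [p [Hp HuL]]]].
    exists (sum_n (fun B => Cmod (u B)) L).
    split; [apply sum_n_nonneg; intros; apply Cmod_ge_0|].
    intros x l Hx Hs.
    assert (Hz : forall B, (L < B)%nat -> (u B * Cpow x B)%C = RtoC 0)
      by (intros B HB; rewrite HuL, Hp by lia; ring).
    rewrite (is_series_unique_C _ _ _ Hs (is_series_finite_support _ L Hz)).
    simpl pow. rewrite Rdiv_1_r.
    eapply Rle_trans; [apply Cmod_sum_n_le|].
    rewrite <- (sum_n_mult_r (K := R_Ring)). apply sum_n_Rle. intros i Hi.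
    change (Cmod (u i * Cpow x i) <= Cmod (u i) * Cmod x).
    rewrite Cmod_mult, Cmod_pow. pose proof (Cmod_ge_0 x). destruct i as [|i].
    + rewrite Hu0, Cmod_0. lra.
    + apply Rmult_le_compat_l; [apply Cmod_ge_0|]. simpl.
      pose proof (pow_le_1 (Cmod x) i ltac:(lra)). pose proof (pow_le (Cmod x) i H). nra.
  - destruct (IH _ (periodic_times_poly_sub_shift j u Hu)) as [C0 [HC0 Hb]].
    exists C0. split; [exact HC0|]. intros x l Hx Hs.
    specialize (Hb x _ Hx (is_series_sub_shift u x l q Hs)).
    rewrite Cmod_mult in Hb.
    pose proof (Cmod_1_sub_pow_pos x q Hq Hx) as Hpos.
    set (D := Cmod (1 - Cpow x q)%C) in *. simpl pow.
    apply Rmult_le_reg_l with D; [exact Hpos|].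
    replace (D * (C0 * Cmod x / (D * D ^ j))) with (C0 * Cmod x / D ^ j)
      by (field; split; [apply pow_nonzero|]; lra).
    exact Hb.
Qed.

End PeriodicTimesPoly.

Lemma is_lim_seq_succ_ratio_pow (m : nat) :
  is_lim_seq (fun n => ((INR n + 2) / (INR n + 1)) ^ m) 1.
Proof.
  assert (Hinv : is_lim_seq (fun n => / (INR n + 1)) 0).
  { assert (H1 : is_lim_seq (fun n => INR n + 1) p_infty).
    { apply is_lim_seq_ext with (fun n => INR (S n)); [intros; apply S_INR|].
      apply (proj1 (is_lim_seq_incr_1 INR p_infty)), is_lim_seq_INR. }
    exact (is_lim_seq_inv _ _ H1 ltac:(discriminate)). }
  assert (Hratio : is_lim_seq (fun n => (INR n + 2) / (INR n + 1)) 1).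
  { apply is_lim_seq_ext with (fun n => 1 + / (INR n + 1)).
    - intros n. pose proof (pos_INR n). field. lra.
    - replace (Finite 1) with (Finite (1 + 0)) by (f_equal; ring).
      apply is_lim_seq_plus'; [apply is_lim_seq_const | exact Hinv]. }
  induction m as [|m IH]; [apply is_lim_seq_const|].
  replace (Finite 1) with (Finite (1 * 1)) by (f_equal; ring).
  apply is_lim_seq_mult'; assumption.
Qed.

Lemma ex_series_poly_geom (m : nat) (r : R) : 0 < r < 1 ->
  ex_series (fun n => (INR n + 1) ^ m * r ^ n).
Proof.
  intros Hr. apply ex_series_Rabs, ex_series_DAlembert with r; [lra| |].
  - intros n. apply Rmult_integral_contrapositive.
    split; apply pow_nonzero; pose proof (pos_INR n); lra.
  - apply is_lim_seq_ext with (fun n => ((INR n + 2) / (INR n + 1)) ^ m * r).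
    + intros n. rewrite S_INR. pose proof (pos_INR n).
      rewrite Rabs_pos_eq.
      * simpl pow at 3. unfold Rdiv. rewrite Rpow_mult_distr, pow_inv.
        replace (INR n + 1 + 1) with (INR n + 2) by ring.
        field. split; apply pow_nonzero; lra.
      * apply Rmult_le_pos; [apply Rmult_le_pos; apply pow_le; lra|].
        left. apply Rinv_0_lt_compat, Rmult_lt_0_compat; apply pow_lt; lra.
    + replace (Finite r) with (Finite (1 * r)) by (f_equal; ring).
      apply is_lim_seq_mult'; [apply is_lim_seq_succ_ratio_pow | apply is_lim_seq_const].
Qed.

Lemma twisted_power_series_bound (q : nat) (chi : Z -> C) (m : nat) : is_dirichlet_char q chi ->
  exists C0, 0 <= C0 /\ forall x : C, 0 < Cmod x < 1 -> exists l,
    is_series (fun j => (Cconj (chi (Z.of_nat (S j))) * RtoC (INR (S j) ^ m) * Cpow x (S j))%C) l /\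
    Cmod l <= C0 * Cmod x / Cmod (1 - Cpow x q)%C ^ (S m).
Proof.
  intros Hchi.
  assert (Hq : (1 <= q)%nat) by (destruct Hchi; lia).
  set (c := fun n => Cconj (chi n)).
  assert (Hper : forall n, c (n + Z.of_nat q)%Z = c n).
  { intros n. unfold c. destruct Hchi as [_ [_ [_ [Hp _]]]]. rewrite Hp. reflexivity. }
  set (u := fun B => if (B =? 0)%nat then RtoC 0 else (c (Z.of_nat B) * RtoC (INR B ^ m))%C).
  assert (Hu : periodic_times_poly c (S m) u).
  { split; [reflexivity|]. exists 1%nat, (fun y => y ^ m).
    split; [apply diff_annihilated_pow|].
    intros B HB. unfold u. destruct (Nat.eqb_spec B 0); [lia|reflexivity]. }
  destruct (periodic_times_poly_series_bound q c Hq Hper (S m) u Hu) as [C0 [HC0 Hb]].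
  exists C0. split; [exact HC0|]. intros x Hx.
  set (f := fun j => (Cconj (chi (Z.of_nat (S j))) * RtoC (INR (S j) ^ m) * Cpow x (S j))%C).
  assert (Hex : exists l, is_series f l).
  { apply ex_series_C_le with (fun n => (INR n + 1) ^ m * Cmod x ^ n);
      [|apply ex_series_poly_geom; assumption].
    intros n. unfold f. rewrite !Cmod_mult, Cmod_conj, Cmod_R, Cmod_pow.
    pose proof (dirichlet_char_norm_le_1 q chi Hchi (Z.of_nat (S n))).
    pose proof (Cmod_ge_0 (chi (Z.of_nat (S n)))).
    rewrite Rabs_pos_eq by (apply pow_le, pos_INR).
    rewrite S_INR. simpl pow at 2.
    assert (0 <= (INR n + 1) ^ m) by (apply pow_le; pose proof (pos_INR n); lra).
    assert (0 <= Cmod x ^ n) by (apply pow_le, Cmod_ge_0).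
    assert (Cmod x * Cmod x ^ n <= Cmod x ^ n) by nra.
    apply Rle_trans with (1 * (INR n + 1) ^ m * Cmod x ^ n); [|lra].
    apply Rmult_le_compat; [nra | nra | apply Rmult_le_compat_r; lra | lra]. }
  destruct Hex as [l Hl]. exists l. split; [exact Hl|].
  apply Hb; [lra|].
  apply is_series_decr_1.
  match goal with |- is_series _ ?L => replace L with l end.
  - eapply is_series_ext; [|exact Hl]. reflexivity.
  - unfold u. simpl. unfold plus, opp. simpl. apply injective_projections; simpl; ring.
Qed.

(** * Lower bounds for [|1 - e w|] *)

Lemma exp_le_mono x y : x <= y -> exp x <= exp y.
Proof. intros [H|H]; [left; apply exp_increasing, H | right; rewrite H; reflexivity]. Qed.

Lemma Cmod_1_sub_e_sq_ge (w : C) :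
  4 * exp (-2 * PI * Im w) * sin (PI * Re w) ^ 2 <= Cmod (1 - e w)%C ^ 2.
Proof.
  unfold Cmod. rewrite pow2_sqrt by (apply Rplus_le_le_0_compat; apply pow2_ge_0).
  unfold e. cbn [Re Im fst snd RtoC Cminus Cplus Copp].
  set (r := exp (-2 * PI * Im w)). set (u := PI * Re w).
  replace (2 * PI * Re w) with (2 * u) by (unfold u; ring).
  rewrite cos_2a_sin, sin_2a.
  assert (Hc : cos u * cos u = 1 - sin u * sin u)
    by (pose proof (sin2_cos2 u) as H; unfold Rsqr in H; lra).
  assert (0 < r) by apply exp_pos.
  (* |1 - r e(Re w)|^2 = (1 - r)^2 + 4 r sin^2 (PI Re w) *)
  match goal with |- _ <= ?R => replace R with ((1 - r) ^ 2 + 4 * r * sin u ^ 2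
      + 4 * r * r * sin u ^ 2 * (cos u * cos u - (1 - sin u * sin u))) by ring end.
  rewrite Hc. pose proof (pow2_ge_0 (1 - r)). nra.
Qed.

Lemma Cmod_1_sub_e_ge (w : C) : 1 - exp (-2 * PI * Im w) <= Cmod (1 - e w)%C.
Proof.
  rewrite <- Cmod_e. pose proof (Cmod_triangle (1 - e w)%C (e w)) as H.
  replace (1 - e w + e w)%C with (RtoC 1) in H by ring. rewrite Cmod_1 in H. lra.
Qed.

Lemma sin_sq_add_IZR_PI (x : R) (k : Z) : sin (x + IZR k * PI) ^ 2 = sin x ^ 2.
Proof.
  assert (Hs : sin (IZR k * PI) = 0) by (apply sin_eq_0_1; exists k; reflexivity).
  assert (Hc : cos (IZR k * PI) ^ 2 = 1)
    by (pose proof (sin2_cos2 (IZR k * PI)) as H; rewrite Hs in H; unfold Rsqr in H; lra).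
  rewrite sin_plus, Hs.
  replace ((sin x * cos (IZR k * PI) + cos x * 0) ^ 2)
    with (sin x ^ 2 * cos (IZR k * PI) ^ 2) by ring.
  rewrite Hc. ring.
Qed.

Lemma sin_ge_third (y : R) : 0 <= y <= PI / 2 -> y / 3 <= sin y.
Proof.
  intros Hy. pose proof PI2_3_2. pose proof PI_4.
  destruct (sin_bound y 0 ltac:(lra) ltac:(lra)) as [Hl _].
  replace (sin_approx y (2 * 0 + 1)) with (y - y ^ 3 / 6) in Hl
    by (unfold sin_approx, sin_term; simpl; field).
  nra.
Qed.

Lemma sin_sq_PI_div_mod (t N : Z) : (0 < N)%Z ->
  sin (PI * IZR t / IZR N) ^ 2 = sin (PI * IZR (t mod N) / IZR N) ^ 2.
Proof.
  intros HN. rewrite <- (sin_sq_add_IZR_PI (PI * IZR (t mod N) / IZR N) (t / N)).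
  assert (IZR N <> 0) by (apply not_0_IZR; lia).
  rewrite (Z.div_mod t N) at 1 by lia. rewrite plus_IZR, mult_IZR.
  f_equal. f_equal. field. assumption.
Qed.

Lemma sin_sq_PI_div_refl (r N : Z) : (0 < N)%Z ->
  sin (PI * IZR (N - r) / IZR N) ^ 2 = sin (PI * IZR r / IZR N) ^ 2.
Proof.
  intros HN. assert (IZR N <> 0) by (apply not_0_IZR; lia).
  replace (PI * IZR (N - r) / IZR N) with (- (PI * IZR r / IZR N) + IZR 1 * PI)
    by (rewrite minus_IZR; field; assumption).
  rewrite sin_sq_add_IZR_PI, sin_neg. ring.
Qed.

Lemma sin_sq_ge_mdist (d N : Z) (A : nat) (s : Z) : (2 <= N)%Z -> Z.gcd d N = 1%Z ->
  (1 <= A)%nat -> (Z.of_nat A < N)%Z -> (s = d \/ s = - d)%Z ->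
  (IZR (mdist d N A) / IZR N) ^ 2 <= sin (PI * IZR (Z.of_nat A * s) / IZR N) ^ 2.
Proof.
  intros HN Hg H1 H2 Hs.
  pose proof (mres_pos d N HN Hg A H1 H2). pose proof (mres_spec d N HN A) as [_ Hr].
  pose proof (mdist_bounds d N HN Hg A H1 H2) as [Hd1 Hd2].
  assert (E1 : sin (PI * IZR (Z.of_nat A * s) / IZR N) ^ 2
             = sin (PI * IZR (mres d N A) / IZR N) ^ 2).
  { rewrite sin_sq_PI_div_mod by lia. destruct Hs as [-> | ->]; [reflexivity|].
    replace (Z.of_nat A * - d)%Z with (- (Z.of_nat A * d))%Z by ring.
    rewrite Z_mod_nz_opp_full by (fold (mres d N A); lia).
    apply sin_sq_PI_div_refl. lia. }
  assert (E2 : sin (PI * IZR (mres d N A) / IZR N) ^ 2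
             = sin (PI * IZR (mdist d N A) / IZR N) ^ 2).
  { unfold mdist. destruct (Z.le_gt_cases (mres d N A) (N - mres d N A)).
    - rewrite Z.min_l by lia. reflexivity.
    - rewrite Z.min_r, sin_sq_PI_div_refl by lia. reflexivity. }
  rewrite E1, E2.
  assert (HNr : 2 <= IZR N) by (apply IZR_le; lia).
  assert (HD : 1 <= IZR (mdist d N A)) by (apply IZR_le; lia).
  assert (HD2 : 2 * IZR (mdist d N A) <= IZR N) by (rewrite <- mult_IZR; apply IZR_le; lia).
  set (D := IZR (mdist d N A)) in *. pose proof PI2_3_2.
  assert (Hy : 0 <= PI * D / IZR N <= PI / 2).
  { split; [apply Rdiv_le_0_compat; nra|].
    apply Rmult_le_reg_r with (IZR N); [lra|].
    unfold Rdiv. rewrite Rmult_assoc, Rinv_l by lra. nra. }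
  pose proof (sin_ge_third _ Hy).
  assert (D / IZR N <= PI * D / IZR N / 3).
  { unfold Rdiv. rewrite !Rmult_assoc. rewrite <- (Rmult_comm (/ 3)), <- !Rmult_assoc.
    apply Rmult_le_compat_r; [left; apply Rinv_0_lt_compat; lra|]. nra. }
  assert (0 <= D / IZR N) by (apply Rdiv_le_0_compat; lra).
  apply pow_incr. lra.
Qed.

Lemma Cmod_1_sub_e_ge_mdist (d N : Z) (A : nat) (s : Z) (w : C) :
  (2 <= N)%Z -> Z.gcd d N = 1%Z -> (1 <= A)%nat -> (Z.of_nat A < N)%Z -> (s = d \/ s = - d)%Z ->
  Re w = INR A * IZR s / IZR N -> Im w = INR A / IZR N ->
  2 * exp (- PI) * (IZR (mdist d N A) / IZR N) <= Cmod (1 - e w)%C.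
Proof.
  intros HN Hg H1 H2 Hs HRe HIm.
  pose proof (Cmod_1_sub_e_sq_ge w) as Hsq. rewrite HRe, HIm in Hsq.
  pose proof (sin_sq_ge_mdist d N A s HN Hg H1 H2 Hs) as Hsd.
  rewrite mult_IZR, <- INR_IZR_INZ in Hsd.
  replace (PI * (INR A * IZR s / IZR N)) with (PI * (INR A * IZR s) / IZR N) in Hsq
    by (unfold Rdiv; ring).
  assert (HNr : 2 <= IZR N) by (apply IZR_le; lia).
  assert (HA : INR A < IZR N) by (rewrite INR_IZR_INZ; apply IZR_lt; assumption).
  assert (Hex : exp (-2 * PI) <= exp (-2 * PI * (INR A / IZR N))).
  { apply exp_le_mono. pose proof PI_RGT_0.
    assert (INR A / IZR N <= 1) by (apply (proj1 (Rdiv_le_1 (INR A) (IZR N) ltac:(lra))); lra).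
    nra. }
  set (D := IZR (mdist d N A) / IZR N) in *.
  assert (HD : 0 <= D).
  { apply Rdiv_le_0_compat; [|lra]. apply IZR_le.
    pose proof (mdist_bounds d N HN Hg A H1 H2). lia. }
  assert (Hsq2 : (2 * exp (- PI) * D) ^ 2 <= Cmod (1 - e w)%C ^ 2).
  { replace ((2 * exp (- PI) * D) ^ 2) with (4 * exp (-2 * PI) * D ^ 2)
      by (replace (-2 * PI) with (- PI + - PI) by ring; rewrite exp_plus; ring).
    eapply Rle_trans; [|exact Hsq].
    pose proof (exp_pos (-2 * PI)). pose proof (pow2_ge_0 D).
    apply Rmult_le_compat; [lra | lra | apply Rmult_le_compat_l; lra | exact Hsd]. }
  pose proof (exp_pos (- PI)). pose proof (Cmod_ge_0 (1 - e w)%C).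
  nra.
Qed.

Lemma Cmod_1_sub_e_ge_half (N : Z) (A : nat) (w : C) : (1 <= N)%Z -> (N <= Z.of_nat A)%Z ->
  Im w = INR A / IZR N -> / 2 <= Cmod (1 - e w)%C.
Proof.
  intros HN HA HIm. eapply Rle_trans; [|apply Cmod_1_sub_e_ge]. rewrite HIm.
  assert (HNr : 1 <= IZR N) by (apply IZR_le; lia).
  assert (HAr : IZR N <= INR A) by (rewrite INR_IZR_INZ; apply IZR_le; assumption).
  assert (1 <= INR A / IZR N)
    by (apply Rmult_le_reg_r with (IZR N); [lra|]; unfold Rdiv; rewrite Rmult_assoc, Rinv_l; lra).
  pose proof PI_RGT_0. pose proof PI2_3_2.
  assert (exp (-2 * PI * (INR A / IZR N)) <= exp (-2 * PI)) by (apply exp_le_mono; nra).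
  assert (exp (-2 * PI) <= / 2).
  { replace (-2 * PI) with (- (2 * PI)) by ring. rewrite exp_Ropp.
    pose proof (exp_ineq1 (2 * PI) ltac:(lra)). apply Rinv_le_contravar; lra. }
  lra.
Qed.

Lemma Cmod_1_sub_e_ge_any (N : Z) (A : nat) (w : C) : (1 <= N)%Z -> (1 <= A)%nat ->
  Im w = INR A / IZR N -> 1 - exp (-2 * PI / IZR N) <= Cmod (1 - e w)%C.
Proof.
  intros HN HA HIm. eapply Rle_trans; [|apply Cmod_1_sub_e_ge]. rewrite HIm.
  assert (HNr : 1 <= IZR N) by (apply IZR_le; lia).
  assert (1 <= INR A) by (apply (le_INR 1); lia).
  pose proof PI_RGT_0.
  assert (0 < PI / IZR N) by (apply Rdiv_lt_0_compat; lra).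
  assert (exp (-2 * PI * (INR A / IZR N)) <= exp (-2 * PI / IZR N)).
  { apply exp_le_mono. unfold Rdiv in *. nra. }
  lra.
Qed.

Lemma inv_1_sub_exp_le (g : R) : 1 <= g -> / (1 - exp (-2 * PI / g)) <= 1 + g.
Proof.
  intros Hg. pose proof PI_RGT_0. pose proof PI2_3_2.
  set (t := 2 * PI / g).
  assert (Ht : 0 < t) by (apply Rdiv_lt_0_compat; lra).
  replace (-2 * PI / g) with (- t) by (unfold t; field; lra).
  rewrite exp_Ropp. pose proof (exp_ineq1 t ltac:(lra)). pose proof (exp_pos t).
  replace (/ (1 - / exp t)) with (1 + / (exp t - 1)) by (field; lra).
  assert (/ (exp t - 1) <= / t) by (apply Rinv_le_contravar; lra).
  assert (/ t <= g).
  { unfold t. rewrite Rinv_div. unfold Rdiv.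
    rewrite <- (Rmult_1_r g) at 2. apply Rmult_le_compat_l; [lra|].
    rewrite <- Rinv_1. apply Rinv_le_contravar; lra. }
  lra.
Qed.

Lemma exp_nat_mul (t : R) (A : nat) : exp (INR A * t) = exp t ^ A.
Proof.
  induction A as [|A IH]; [simpl; rewrite Rmult_0_l, exp_0; reflexivity|].
  rewrite S_INR, Rmult_plus_distr_r, Rmult_1_l, exp_plus, IH. simpl. ring.
Qed.

Lemma inv_pow_le_inv (Y : R) (j : nat) : 1 <= Y -> / Y ^ (S j) <= / Y.
Proof.
  intros HY. apply Rinv_le_contravar; [lra|]. simpl.
  rewrite <- (Rmult_1_r Y) at 1. apply Rmult_le_compat_l; [lra|]. apply pow_R1_Rle. lra.
Qed.

Lemma inv_pow_le_inv_pow (Y Y0 : R) (j : nat) : 0 < Y0 <= Y -> / Y ^ j <= / Y0 ^ j.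
Proof. intros H. apply Rinv_le_contravar; [apply pow_lt; lra | apply pow_incr; lra]. Qed.

(* [C2] is the constant of [twisted_power_series_bound], independent of the
   matrix; [s] is [-d] for [z1] and [a] for [gamma z1], with [c = q2 N]. *)
Section MainBound.
Variables (q1 q2 : nat) (chi1 chi2 : Z -> C) (k n m : nat) (C2 : R).
Hypothesis Hchi1 : is_dirichlet_char q1 chi1.
Hypothesis Hq2 : (1 <= q2)%nat.
Hypothesis Hm : (k - n - 2 = m)%nat.
Hypothesis HC2 : 0 <= C2.
Hypothesis Hinner : forall x : C, 0 < Cmod x < 1 -> exists l,
  is_series (fun j =>
    (Cconj (chi2 (Z.of_nat (S j))) * RtoC (INR (S j) ^ m) * Cpow x (S j))%C) l /\
  Cmod l <= C2 * Cmod x / Cmod (1 - Cpow x q2)%C ^ (S m).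

Definition K_head : R := C2 / (2 * exp (- PI)) ^ (S m).
Definition K_tail : R := C2 * 2 ^ (S m).
Definition K_main : R := 480 * K_head + 4 * K_tail * (1 + INR q2).

Variables (d N c s : Z).
Hypothesis HN : (2 <= N)%Z.
Hypothesis Hc : c = (Z.of_nat q2 * N)%Z.
Hypothesis Hg : Z.gcd d N = 1%Z.
Hypothesis Hs : (s = d \/ s = - d)%Z.

Let z : C := Cdiv (Cplus Ci (RtoC (IZR s))) (RtoC (IZR c)).
Let rho : R := exp (-2 * PI / IZR c).

Lemma IZR_c_eq : IZR c = INR q2 * IZR N.
Proof. rewrite Hc, mult_IZR, <- INR_IZR_INZ. reflexivity. Qed.

Lemma IZR_c_ge_2 : 2 <= IZR c.
Proof. apply IZR_le. subst c. nia. Qed.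

Lemma Re_Im_scal_z (t : R) :
  Re (RtoC t * z)%C = t * IZR s / IZR c /\ Im (RtoC t * z)%C = t / IZR c.
Proof.
  pose proof IZR_c_ge_2. unfold z, Cdiv, Cinv, Cmult, Cplus, Ci, RtoC. simpl.
  split; field; lra.
Qed.

Definition xA (A : nat) : C := e (RtoC (INR A) * z)%C.

Lemma Cmod_xA A : Cmod (xA A) = rho ^ A.
Proof.
  unfold xA, rho. rewrite Cmod_e, (proj2 (Re_Im_scal_z _)), <- exp_nat_mul.
  pose proof IZR_c_ge_2. f_equal. field. lra.
Qed.

Lemma rho_bounds : 0 < rho < 1.
Proof.
  unfold rho. split; [apply exp_pos|]. rewrite <- exp_0. apply exp_increasing.
  pose proof PI_RGT_0. pose proof IZR_c_ge_2.
  assert (0 < PI / IZR c) by (apply Rdiv_lt_0_compat; lra). unfold Rdiv in *. lra.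
Qed.

Lemma xA_pow_q2 A : exists w, Cpow (xA A) q2 = e w /\
  Re w = INR A * IZR s / IZR N /\ Im w = INR A / IZR N.
Proof.
  exists (RtoC (INR q2 * INR A) * z)%C. split.
  - unfold xA. rewrite <- e_nat_mul. f_equal. rewrite RtoC_mult. ring.
  - destruct (Re_Im_scal_z (INR q2 * INR A)) as [-> ->]. rewrite IZR_c_eq.
    assert (IZR N <> 0) by (apply not_0_IZR; lia).
    assert (INR q2 <> 0) by (apply not_0_INR; lia).
    split; field; auto.
Qed.

Definition inner (A : nat) : nat -> C := fun j =>
  Cmult (Cmult (Cconj (chi2 (Z.of_nat (S j)))) (RtoC (INR (S j) ^ (k - n - 2))))
        (e (Cmult (RtoC (INR A * INR (S j))) z)).

Lemma Cmod_CSeries_inner A : (1 <= A)%nat ->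
  Cmod (CSeries (inner A)) <= C2 * Cmod (xA A) / Cmod (1 - Cpow (xA A) q2)%C ^ (S m).
Proof.
  intros HA.
  assert (Hx : 0 < Cmod (xA A) < 1).
  { rewrite Cmod_xA. pose proof rho_bounds.
    split; [apply pow_lt; lra | apply pow_lt_1_compat; lra || lia]. }
  destruct (Hinner (xA A) Hx) as [l [Hl Hb]].
  rewrite (CSeries_correct (inner A) l); [exact Hb|].
  eapply is_series_ext; [|exact Hl]. intros j. unfold inner. rewrite Hm.
  f_equal. unfold xA. rewrite <- e_nat_mul. f_equal. rewrite RtoC_mult. ring.
Qed.

Definition outer_term (i : nat) : C :=
  Cmult (Cdiv (chi1 (Z.of_nat (S i))) (RtoC (INR (S i) ^ (n + 1)))) (CSeries (inner (S i))).

Definition term_bound (A : nat) : R :=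
  / INR A ^ (n + 1) * (C2 * Cmod (xA A) / Cmod (1 - Cpow (xA A) q2)%C ^ (S m)).

Lemma Cmod_outer_term_le i : Cmod (outer_term i) <= term_bound (S i).
Proof.
  unfold outer_term, term_bound. pose proof (Cmod_CSeries_inner (S i) ltac:(lia)) as Hb.
  assert (HA : 0 < INR (S i) ^ (n + 1)) by (apply pow_lt, lt_0_INR; lia).
  rewrite Cmod_mult, Cmod_div, Cmod_R, Rabs_pos_eq by (lra || (intro H; apply RtoC_inj in H; lra)).
  pose proof (dirichlet_char_norm_le_1 q1 chi1 Hchi1 (Z.of_nat (S i))).
  pose proof (Cmod_ge_0 (chi1 (Z.of_nat (S i)))).
  assert (0 < / INR (S i) ^ (n + 1)) by (apply Rinv_0_lt_compat; assumption).
  unfold Rdiv. apply Rmult_le_compat; [apply Rmult_le_pos; lra | apply Cmod_ge_0 | nra | exact Hb].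
Qed.

Lemma term_bound_le A Y0 : (1 <= A)%nat -> 0 < Y0 -> Y0 <= Cmod (1 - Cpow (xA A) q2)%C ->
  term_bound A <= / INR A * (C2 * rho ^ A * / Y0 ^ (S m)).
Proof.
  intros HA HY0 HY. unfold term_bound. rewrite Cmod_xA.
  pose proof rho_bounds. pose proof (pow_le rho A ltac:(lra)).
  replace (n + 1)%nat with (S n) by lia.
  apply Rmult_le_compat.
  - left. apply Rinv_0_lt_compat, pow_lt, lt_0_INR. lia.
  - apply Rdiv_le_0_compat; [apply Rmult_le_pos; lra | apply pow_lt; lra].
  - apply inv_pow_le_inv, (le_INR 1). lia.
  - unfold Rdiv. apply Rmult_le_compat_l; [apply Rmult_le_pos; lra|].
    apply inv_pow_le_inv_pow. lra.
Qed.

Lemma term_bound_head A : (1 <= A)%nat -> (Z.of_nat A < N)%Z ->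
  term_bound A <= K_head * IZR N ^ (S m) * / (INR A * IZR (mdist d N A)).
Proof.
  intros HA HAN.
  destruct (xA_pow_q2 A) as [w [Ew [HRe HIm]]].
  pose proof (Cmod_1_sub_e_ge_mdist d N A s w HN Hg HA HAN Hs HRe HIm) as HY. rewrite <- Ew in HY.
  pose proof (mdist_bounds d N HN Hg A HA HAN) as [Hd1 Hd2].
  assert (HNr : 2 <= IZR N) by (apply IZR_le; lia).
  assert (HD : 1 <= IZR (mdist d N A)) by (apply IZR_le; lia).
  set (kap := 2 * exp (- PI)) in *.
  assert (Hk : 0 < kap) by (unfold kap; pose proof (exp_pos (- PI)); lra).
  set (D := IZR (mdist d N A)) in *.
  assert (HY0 : 0 < kap * (D / IZR N)) by (apply Rmult_lt_0_compat; [|apply Rdiv_lt_0_compat]; lra).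
  eapply Rle_trans; [apply (term_bound_le A _ HA HY0 HY)|].
  pose proof rho_bounds.
  assert (HAr : 0 < INR A) by (apply lt_0_INR; lia).
  assert (Hrho : rho ^ A <= 1) by (apply pow_le_1; lra).
  replace (/ (kap * (D / IZR N)) ^ S m) with (/ kap ^ S m * IZR N ^ S m * / D ^ S m)
    by (rewrite !Rpow_mult_distr; unfold Rdiv; rewrite Rpow_mult_distr, pow_inv;
        field; repeat split; apply pow_nonzero; lra).
  pose proof (inv_pow_le_inv D m HD) as HDm.
  unfold K_head. fold kap. unfold Rdiv.
  assert (0 < / kap ^ S m) by (apply Rinv_0_lt_compat, pow_lt; lra).
  assert (0 < IZR N ^ S m) by (apply pow_lt; lra).
  assert (0 < / D) by (apply Rinv_0_lt_compat; lra).
  assert (0 < / INR A) by (apply Rinv_0_lt_compat; lra).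
  assert (0 <= rho ^ A) by (apply pow_le; lra).
  rewrite Rinv_mult.
  apply Rle_trans with (/ INR A * (C2 * 1 * (/ kap ^ S m * IZR N ^ S m * / D))); [|right; ring].
  apply Rmult_le_compat_l; [lra|].
  apply Rmult_le_compat; [apply Rmult_le_pos; lra | | apply Rmult_le_compat_l; lra | ].
  - left. apply Rmult_lt_0_compat; [apply Rmult_lt_0_compat | apply Rinv_0_lt_compat, pow_lt]; lra.
  - apply Rmult_le_compat_l; [left; apply Rmult_lt_0_compat|]; lra.
Qed.

Lemma term_bound_tail A : (N <= Z.of_nat A)%Z -> term_bound A <= K_tail / IZR N * rho ^ A.
Proof.
  intros HAN. assert (HA : (1 <= A)%nat) by lia.
  destruct (xA_pow_q2 A) as [w [Ew [_ HIm]]].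
  pose proof (Cmod_1_sub_e_ge_half N A w ltac:(lia) HAN HIm) as HY. rewrite <- Ew in HY.
  eapply Rle_trans; [apply (term_bound_le A (/ 2) HA ltac:(lra) HY)|].
  assert (HNr : 2 <= IZR N) by (apply IZR_le; lia).
  assert (HAr : IZR N <= INR A) by (rewrite INR_IZR_INZ; apply IZR_le; assumption).
  pose proof rho_bounds. pose proof (pow_le rho A ltac:(lra)).
  rewrite pow_inv, Rinv_inv. unfold K_tail, Rdiv.
  replace (C2 * 2 ^ S m * / IZR N * rho ^ A) with (/ IZR N * (C2 * rho ^ A * 2 ^ S m)) by ring.
  apply Rmult_le_compat_r; [apply Rmult_le_pos; [apply Rmult_le_pos|apply pow_le]; lra|].
  apply Rinv_le_contravar; lra.
Qed.

Lemma term_bound_geom A : (1 <= A)%nat ->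
  term_bound A <= C2 / (1 - exp (-2 * PI / IZR N)) ^ (S m) * rho ^ A.
Proof.
  intros HA.
  destruct (xA_pow_q2 A) as [w [Ew [_ HIm]]].
  pose proof (Cmod_1_sub_e_ge_any N A w ltac:(lia) HA HIm) as HY. rewrite <- Ew in HY.
  assert (HNr : 2 <= IZR N) by (apply IZR_le; lia).
  assert (Hd0 : 0 < 1 - exp (-2 * PI / IZR N)).
  { pose proof PI_RGT_0. assert (0 < PI / IZR N) by (apply Rdiv_lt_0_compat; lra).
    assert (exp (-2 * PI / IZR N) < 1)
      by (rewrite <- exp_0; apply exp_increasing; unfold Rdiv in *; lra).
    lra. }
  eapply Rle_trans; [apply (term_bound_le A _ HA Hd0 HY)|].
  assert (1 <= INR A) by (apply (le_INR 1); lia).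
  pose proof rho_bounds. pose proof (pow_le rho A ltac:(lra)).
  assert (0 < / (1 - exp (-2 * PI / IZR N)) ^ S m) by (apply Rinv_0_lt_compat, pow_lt; lra).
  apply Rle_trans with (1 * (C2 * rho ^ A * / (1 - exp (-2 * PI / IZR N)) ^ S m));
    [|right; unfold Rdiv; ring].
  apply Rmult_le_compat_r; [apply Rmult_le_pos; [apply Rmult_le_pos|]; lra|].
  rewrite <- Rinv_1. apply Rinv_le_contravar; lra.
Qed.

Definition head_bound (A : nat) : R :=
  if (1 <=? A)%nat then
    (if (A <? Z.to_nat N)%nat then K_head * IZR N ^ (S m) * / (INR A * IZR (mdist d N A)) else 0)
  else 0.

Definition tail_bound (A : nat) : R := if (1 <=? A)%nat then K_tail / IZR N * rho ^ A else 0.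

Lemma K_head_nonneg : 0 <= K_head.
Proof.
  unfold K_head. apply Rdiv_le_0_compat; [exact HC2|].
  apply pow_lt. pose proof (exp_pos (- PI)). lra.
Qed.

Lemma K_tail_nonneg : 0 <= K_tail.
Proof. unfold K_tail. apply Rmult_le_pos; [exact HC2 | apply pow_le; lra]. Qed.

Lemma tail_bound_nonneg A : 0 <= tail_bound A.
Proof.
  unfold tail_bound. destruct (1 <=? A)%nat; [|lra].
  pose proof K_tail_nonneg. pose proof rho_bounds.
  assert (2 <= IZR N) by (apply IZR_le; lia).
  apply Rmult_le_pos; [apply Rdiv_le_0_compat; lra | apply pow_le; lra].
Qed.

Lemma term_bound_le_head_tail A :
  (if (1 <=? A)%nat then term_bound A else 0) <= head_bound A + tail_bound A.
Proof.
  pose proof (tail_bound_nonneg A).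
  unfold head_bound. destruct (Nat.leb_spec 1 A); [|unfold tail_bound in *; lra].
  destruct (Nat.ltb_spec A (Z.to_nat N)).
  - pose proof (term_bound_head A ltac:(assumption) ltac:(lia)). lra.
  - pose proof (term_bound_tail A ltac:(lia)). unfold tail_bound in *.
    destruct (Nat.leb_spec 1 A); [lra|lia].
Qed.

Lemma fsum_head_bound_le N' :
  fsum head_bound N' <= 480 * K_head * IZR (Mcf d N) * IZR N ^ m * ln (IZR N) ^ 2.
Proof.
  assert (HNr : 2 <= IZR N) by (apply IZR_le; lia). pose proof K_head_nonneg.
  eapply Rle_trans; [apply (fsum_trunc head_bound (Z.to_nat N))|].
  - intros A HA. unfold head_bound.
    destruct (1 <=? A)%nat; [destruct (Nat.ltb_spec A (Z.to_nat N)); [lia|]|]; reflexivity.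
  - intros A. unfold head_bound. destruct (Nat.leb_spec 1 A); [|lra].
    destruct (Nat.ltb_spec A (Z.to_nat N)); [|lra].
    pose proof (mdist_bounds d N HN Hg A ltac:(assumption) ltac:(lia)).
    apply Rmult_le_pos; [apply Rmult_le_pos; [assumption | apply pow_le; lra]|].
    left. apply Rinv_0_lt_compat, Rmult_lt_0_compat; [apply lt_0_INR; lia | apply IZR_lt; lia].
  - rewrite (fsum_ext head_bound (fun A => K_head * IZR N ^ (S m) *
      (if (1 <=? A)%nat then / (INR A * IZR (mdist d N A)) else 0))).
    + rewrite fsum_scal.
      apply Rle_trans with (K_head * IZR N ^ S m * (480 * IZR (Mcf d N) * ln (IZR N) ^ 2 / IZR N)).
      * apply Rmult_le_compat_l; [apply Rmult_le_pos; [assumption | apply pow_le; lra]|].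
        apply sum_inv_mdist_le; assumption.
      * right. simpl pow. field. lra.
    + intros i Hi. unfold head_bound. destruct (1 <=? i)%nat; [|ring].
      destruct (Nat.ltb_spec i (Z.to_nat N)); [reflexivity|lia].
Qed.

Lemma fsum_tail_bound_le N' : fsum tail_bound N' <= K_tail * (1 + INR q2).
Proof.
  assert (HNr : 2 <= IZR N) by (apply IZR_le; lia).
  pose proof K_tail_nonneg. pose proof rho_bounds. pose proof IZR_c_ge_2.
  assert (0 <= K_tail / IZR N) by (apply Rdiv_le_0_compat; lra).
  apply Rle_trans with (K_tail / IZR N * fsum (fun A => rho ^ A) N').
  - rewrite <- fsum_scal. apply fsum_le. intros i _. unfold tail_bound.
    destruct (1 <=? i)%nat; [lra|]. apply Rmult_le_pos; [lra | apply pow_le; lra].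
  - pose proof (fsum_geom rho N' ltac:(lra)).
    pose proof (inv_1_sub_exp_le (IZR c) ltac:(lra)).
    apply Rle_trans with (K_tail / IZR N * (1 + IZR c));
      [apply Rmult_le_compat_l; unfold rho in *; lra|].
    rewrite IZR_c_eq. unfold Rdiv.
    replace (K_tail * / IZR N * (1 + INR q2 * IZR N)) with (K_tail * (/ IZR N + INR q2))
      by (field; lra).
    apply Rmult_le_compat_l; [assumption|].
    assert (/ IZR N <= 1) by (rewrite <- Rinv_1; apply Rinv_le_contravar; lra). lra.
Qed.

Lemma ex_series_outer_term : exists L, is_series outer_term L.
Proof.
  assert (HNr : 2 <= IZR N) by (apply IZR_le; lia).
  pose proof rho_bounds.
  set (Kb := C2 / (1 - exp (-2 * PI / IZR N)) ^ (S m)).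
  apply ex_series_C_le with (fun i => Kb * rho * rho ^ i).
  - intros i. eapply Rle_trans; [apply Cmod_outer_term_le|].
    eapply Rle_trans; [apply term_bound_geom; lia|].
    right. fold Kb. rewrite <- tech_pow_Rmult. ring.
  - apply (ex_series_scal (K := R_AbsRing) (Kb * rho) (fun i => rho ^ i)), ex_series_geom.
    rewrite Rabs_pos_eq; lra.
Qed.

Lemma Cmod_double_sum_le :
  Cmod (double_sum chi1 chi2 k n z) <= K_main * IZR (Mcf d N) * IZR c ^ m * ln (IZR N) ^ 2.
Proof.
  destruct ex_series_outer_term as [L HL].
  change (double_sum chi1 chi2 k n z) with (CSeries outer_term). rewrite (CSeries_correct _ _ HL).
  apply (Cmod_series_le _ _ _ HL). intros N'.
  eapply Rle_trans; [apply Cmod_sum_n_le|].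
  eapply Rle_trans;
    [apply (sum_n_Rle _ (fun i => term_bound (S i))); intros; apply Cmod_outer_term_le|].
  rewrite sum_n_fsum.
  eapply Rle_trans; [apply fsum_le; intros A _; apply term_bound_le_head_tail|].
  rewrite fsum_plus.
  pose proof (fsum_head_bound_le (S (S N'))). pose proof (fsum_tail_bound_le (S (S N'))).
  pose proof (Mcf_bounds d N HN Hg).
  assert (HNr : 2 <= IZR N) by (apply IZR_le; lia).
  assert (HMr : 1 <= IZR (Mcf d N)) by (apply IZR_le; lia).
  pose proof (ln_gt_half _ HNr). pose proof IZR_c_ge_2.
  pose proof K_head_nonneg. pose proof K_tail_nonneg. pose proof (pos_INR q2).
  assert (HNc : IZR N ^ m <= IZR c ^ m).
  { apply pow_incr. rewrite IZR_c_eq. split; [lra|].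
    assert (1 <= INR q2) by (apply (le_INR 1); lia). nra. }
  assert (Hcm : 1 <= IZR c ^ m) by (apply pow_R1_Rle; lra).
  assert (Hln : 1 <= 4 * ln (IZR N) ^ 2) by nra.
  set (X := IZR (Mcf d N) * IZR c ^ m * ln (IZR N) ^ 2).
  assert (HX : 1 <= 4 * X).
  { assert (1 <= IZR (Mcf d N) * IZR c ^ m) by nra.
    unfold X. replace (4 * (IZR (Mcf d N) * IZR c ^ m * ln (IZR N) ^ 2))
      with ((IZR (Mcf d N) * IZR c ^ m) * (4 * ln (IZR N) ^ 2)) by ring. nra. }
  assert (480 * K_head * IZR (Mcf d N) * IZR N ^ m * ln (IZR N) ^ 2 <= 480 * K_head * X).
  { unfold X. rewrite !Rmult_assoc. apply Rmult_le_compat_l; [lra|].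
    apply Rmult_le_compat_l; [assumption|]. apply Rmult_le_compat_l; [lra|].
    apply Rmult_le_compat_r; [apply pow2_ge_0 | exact HNc]. }
  assert (K_tail * (1 + INR q2) <= K_tail * (1 + INR q2) * (4 * X))
    by (rewrite <- (Rmult_1_r (K_tail * (1 + INR q2))) at 1;
        apply Rmult_le_compat_l; [apply Rmult_le_pos|]; lra).
  unfold K_main. replace ((480 * K_head + 4 * K_tail * (1 + INR q2)) * IZR (Mcf d N) * IZR c ^ m
    * ln (IZR N) ^ 2) with (480 * K_head * X + K_tail * (1 + INR q2) * (4 * X)) by (unfold X; ring).
  lra.
Qed.

End MainBound.

Theorem lemma4p8 (k : nat) (q1 q2 : nat) (chi1 chi2 : Z -> C) (n : nat) :
  (2 <= k)%nat ->
  primitive_char_conductor q1 chi1 -> nontrivial_char chi1 ->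
  primitive_char_conductor q2 chi2 -> nontrivial_char chi2 ->
  (n <= k - 2)%nat ->
  exists K : R,
    forall a b c d : Z,
      in_Gamma0 (q1 * q2) a b c d -> (1 <= c)%Z ->
      let c' := IZR c / INR q2 in
      let z1 : C := Cdiv (Cplus Ci (RtoC (- IZR d))) (RtoC (IZR c)) in
      let gz1 : C := Cdiv (Cplus Ci (RtoC (IZR a))) (RtoC (IZR c)) in
      Cmod (double_sum chi1 chi2 k n z1)
        <= K * IZR (Mcf d (c / Z.of_nat q2)) * IZR c ^ (k - n - 2) * (ln c') ^ 2
      /\
      Cmod (double_sum chi1 chi2 k n gz1)
        <= K * IZR (Mcf a (c / Z.of_nat q2)) * IZR c ^ (k - n - 2) * (ln c') ^ 2.
Proof.
  (* Of the hypotheses only [q1 >= 2], from the nontriviality of [chi1], matters: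
     it gives [c' >= 2]. *)
  intros _ [Hchi1 _] Hnt1 [Hchi2 _] _ _.
  destruct (twisted_power_series_bound q2 chi2 (k - n - 2) Hchi2) as [C2 [HC2 Hinner]].
  assert (Hq2 : (1 <= q2)%nat) by (destruct Hchi2; lia).
  pose proof (nontrivial_char_modulus_ge_2 q1 chi1 Hchi1 Hnt1) as Hq1.
  exists (K_main q2 (k - n - 2) C2).
  intros a b c d [Hdet [t Ht]] Hc c' z1 gz1.
  rewrite Nat2Z.inj_mul in Ht.
  set (N := (t * Z.of_nat q1)%Z).
  assert (HcN : c = (Z.of_nat q2 * N)%Z) by (unfold N; lia).
  assert (Ht1 : (1 <= t)%Z) by (destruct (Z.le_gt_cases 1 t); [assumption|nia]).
  assert (HN : (2 <= N)%Z) by (unfold N; nia).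
  assert (Hdiv : (c / Z.of_nat q2 = N)%Z) by (rewrite HcN, Z.mul_comm; apply Z.div_mul; lia).
  assert (Hc' : c' = IZR N)
    by (unfold c'; rewrite HcN, mult_IZR, <- INR_IZR_INZ; field; apply not_0_INR; lia).
  rewrite Hdiv, Hc'.
  assert (Hgd : Z.gcd d N = 1%Z)
    by (apply Z.bezout_1_gcd; exists a, (- b * Z.of_nat q2)%Z; rewrite <- Hdet, HcN; ring).
  assert (Hga : Z.gcd a N = 1%Z)
    by (apply Z.bezout_1_gcd; exists d, (- b * Z.of_nat q2)%Z; rewrite <- Hdet, HcN; ring).
  split.
  - unfold z1. rewrite <- opp_IZR.
    apply (Cmod_double_sum_le q1 q2 chi1 chi2 k n _ C2); auto.
  - apply (Cmod_double_sum_le q1 q2 chi1 chi2 k n _ C2); auto.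
Qed.
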